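(* Let $\gamma$ be an oval and fix an origin $O$ in its interior. For a point $A$ in the exterior of $\gamma$, let $\varphi\in(0,\pi)$ be the angle at $A$ between the two tangent segments $Ax_-(A)$ and $Ax_+(A)$, and set $$C_A=\cot\Big(\frac{\varphi}{2}\Big)\left(\frac{1}{|Ax_-(A)|}+\frac{1}{|Ax_+(A)|}\right).$$ Write $A=r(\cos\psi,\sin\psi)$ in polar coordinates centered at $O$. Then for each fixed direction $\psi$, $$\lim_{r\to\infty}C_A=\frac{4}{w_\gamma(\psi)}.$$
   Context: An oval is a smooth closed simple planar curve $\gamma$ with everywhere positive curvature; it bounds a compact strictly convex domain. From an exterior point $A$ there are exactly two tangent lines to $\gamma$. Denote their tangency points by $x_+(A)$ and $x_-(A)$; the formula is symmetric in the two. Width: $w_\gamma(\psi)$ is the distance between the two support lines of $\gamma$ parallel to the direction $(\cos\psi,\sin\psi)$. *)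

From Stdlib Require Import Reals Lra.
From Coquelicot Require Import Coquelicot.
Open Scope R_scope.

Definition det2 (a b c d : R) : R := a * d - b * c.
Definition dot2 (a b c d : R) : R := a * c + b * d.

Definition curv_num (gx gy : R -> R) (t : R) : R :=
  det2 (Derive gx t) (Derive gy t) (Derive_n gx 2 t) (Derive_n gy 2 t).

(* An oval: smooth (C^infinity), closed (T-periodic), simple (injective on a
   period), with everywhere nonvanishing curvature (x'y''-y'x'' <> 0, which
   also forces regularity gamma' <> 0). *)
Definition is_oval (gx gy : R -> R) (T : R) : Prop :=
  0 < T /\
  (forall n t, ex_derive_n gx n t) /\
  (forall n t, ex_derive_n gy n t) /\
  (forall t, gx (t + T) = gx t /\ gy (t + T) = gy t) /\
  (forall s t, 0 <= s < T -> 0 <= t < T ->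
      gx s = gx t -> gy s = gy t -> s = t) /\
  (forall t, curv_num gx gy t <> 0).

(* determinant of gamma'(t) and (P - gamma(t)): zero iff P lies on the
   tangent line at gamma(t) *)
Definition tang_det (gx gy : R -> R) (t px py : R) : R :=
  det2 (Derive gx t) (Derive gy t) (px - gx t) (py - gy t).

(* Interior of the (strictly convex) domain bounded by the oval: points lying
   strictly on the inner side (the side towards which the curve bends) of every
   tangent line. *)
Definition in_interior (gx gy : R -> R) (px py : R) : Prop :=
  forall t, 0 < curv_num gx gy t * tang_det gx gy t px py.

(* Exterior: complement of the closed domain, i.e. strictly on the outer side
   of some tangent line. *)
Definition in_exterior (gx gy : R -> R) (px py : R) : Prop :=
  exists t, curv_num gx gy t * tang_det gx gy t px py < 0.

Definition is_tangency_point (gx gy : R -> R) (ax ay qx qy : R) : Prop :=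
  exists t, qx = gx t /\ qy = gy t /\ tang_det gx gy t ax ay = 0.

Definition dist2 (ax ay bx by' : R) : R := sqrt ((bx - ax) ^ 2 + (by' - ay) ^ 2).

Definition angle_at (ax ay px py qx qy : R) : R :=
  acos (dot2 (px - ax) (py - ay) (qx - ax) (qy - ay) /
        (dist2 ax ay px py * dist2 ax ay qx qy)).

Definition cot (x : R) : R := cos x / sin x.

(* C_A for the point A with tangency points P = x_-(A), Q = x_+(A) *)
Definition C_A (ax ay px py qx qy : R) : R :=
  cot (angle_at ax ay px py qx qy / 2) *
  (/ dist2 ax ay px py + / dist2 ax ay qx qy).

Definition support (gx gy : R -> R) (nx ny : R) : R :=
  real (Lub_Rbar (fun s => exists t, s = dot2 (gx t) (gy t) nx ny)).

(* width in direction psi: distance between the two support lines parallel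
   to (cos psi, sin psi), i.e. with unit normal n = (-sin psi, cos psi):
   h(n) + h(-n) *)
Definition width (gx gy : R -> R) (psi : R) : R :=
  support gx gy (- sin psi) (cos psi) + support gx gy (sin psi) (- cos psi).

From Stdlib Require Import Reals Lra Lia ZArith Classical.
From Coquelicot Require Import Coquelicot.
Open Scope R_scope.

(* Orient the oval so that its curvature is positive (otherwise reverse the
   parameter).  Its tangent direction th(t) then increases by exactly 2 pi per
   period: the angle of gamma(t) - O around the interior point O turns exactly
   once because the curve is simple, and th stays within a half-turn ahead of
   it.  For A = O + r (cos psi, sin psi) the tangency condition at t reads
   r sin(psi - th t) + m t = 0 with m bounded, so for large r it has exactly one
   solution in each half-turn of th around psi and around psi + pi, where th is
   within O(1/r) of psi (resp. psi + pi).  There the height of gamma across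
   the direction psi is within O(1/r^2) of its minimum (resp. maximum), so the
   two tangency points are w(psi) + O(1/r^2) apart across psi.  In Cartesian
   form C_A = (|a||b| + a.b) / |a x b| * (1/|a| + 1/|b|) with a, b the tangent
   segments, and |a|, |b| = r + O(1), a.b = r^2 + O(r), |a x b| = r w(psi) + O(1);
   hence C_A -> (2 r^2 / (r w)) (2 / r) = 4 / w(psi). *)

Lemma periodic_shift_nat (f : R -> R) (T : R) :
  (forall t, f (t + T) = f t) -> forall (n : nat) t, f (t + INR n * T) = f t.
Proof.
  intros Hf n; induction n as [|n IH]; intro t.
  - simpl. f_equal. ring.
  - rewrite S_INR. replace (t + (INR n + 1) * T) with ((t + INR n * T) + T) by ring.
    rewrite Hf. apply IH.
Qed.

Lemma periodic_shift_Z (f : R -> R) (T : R) :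
  (forall t, f (t + T) = f t) -> forall (k : Z) t, f (t + IZR k * T) = f t.
Proof.
  intros Hf k t. destruct k as [|p|p].
  - simpl. f_equal. ring.
  - rewrite <- positive_nat_Z, <- INR_IZR_INZ. apply periodic_shift_nat; auto.
  - replace (IZR (Z.neg p)) with (- INR (Pos.to_nat p))
      by (rewrite INR_IZR_INZ, positive_nat_Z; reflexivity).
    rewrite <- (periodic_shift_nat f T Hf (Pos.to_nat p) (t + - INR (Pos.to_nat p) * T)).
    f_equal. ring.
Qed.

Lemma shift_into_period (T : R) : 0 < T ->
  forall t a, exists k : Z, a <= t + IZR k * T < a + T.
Proof.
  intros HT t a.
  destruct (base_Int_part ((t - a) / T)) as [H1 H2].
  exists (- Int_part ((t - a) / T))%Z. rewrite opp_IZR.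
  set (k := IZR (Int_part ((t - a) / T))) in *.
  assert (E : t - a = ((t - a) / T) * T) by (field; lra).
  assert (0 <= ((t - a) / T - k) * T) by (apply Rmult_le_pos; lra).
  assert (((t - a) / T - k) * T < 1 * T) by (apply Rmult_lt_compat_r; lra).
  split; nra.
Qed.

Lemma continuity_nonzero_same_sign (f : R -> R) :
  continuity f -> (forall t, f t <> 0) -> forall s t, 0 < f s * f t.
Proof.
  intros Hc Hz.
  assert (Hle : forall s t, s <= t -> 0 < f s * f t).
  { intros s t Hst. apply Rnot_le_lt. intro Hneg.
    destruct (IVT_cor f s t Hc Hst Hneg) as [z [_ Hz0]]. exact (Hz z Hz0). }
  intros s t. destruct (Rle_or_lt s t) as [H|H].
  - now apply Hle.
  - rewrite Rmult_comm. apply Hle. lra.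
Qed.

Lemma continuity_nonzero_sign (f : R -> R) :
  continuity f -> (forall t, f t <> 0) ->
  (forall t, 0 < f t) \/ (forall t, f t < 0).
Proof.
  intros Hc Hz. pose proof (continuity_nonzero_same_sign f Hc Hz 0) as Hs.
  destruct (Rlt_or_le 0 (f 0)) as [H0|H0].
  - left. intro t. specialize (Hs t). nra.
  - right. assert (f 0 < 0) by (specialize (Hz 0); lra). intro t. specialize (Hs t). nra.
Qed.

Lemma periodic_min_attained (f : R -> R) (T : R) : 0 < T -> continuity f ->
  (forall t, f (t + T) = f t) -> exists t0, forall t, f t0 <= f t.
Proof.
  intros HT Hc Hp.
  destruct (continuity_ab_min f 0 T (Rlt_le _ _ HT) (fun c _ => Hc c)) as [m [Hm _]].
  exists m. intro t. destruct (shift_into_period T HT t 0) as [k Hk].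
  rewrite <- (periodic_shift_Z f T Hp k t). apply Hm. lra.
Qed.

Lemma periodic_max_attained (f : R -> R) (T : R) : 0 < T -> continuity f ->
  (forall t, f (t + T) = f t) -> exists t0, forall t, f t <= f t0.
Proof.
  intros HT Hc Hp.
  destruct (periodic_min_attained (fun t => - f t) T HT) as [m Hm].
  - intro t. now apply continuity_opp.
  - intro t. now rewrite Hp.
  - exists m. intro t. specialize (Hm t). lra.
Qed.

Lemma sum_sq_pos (a b : R) : a <> 0 \/ b <> 0 -> 0 < a ^ 2 + b ^ 2.
Proof.
  intros [H|H]; apply pow2_gt_0 in H; pose proof (pow2_ge_0 a); pose proof (pow2_ge_0 b); lra.
Qed.

Lemma sq_le_Rabs (x y : R) : 0 <= y -> x ^ 2 <= y ^ 2 -> Rabs x <= y.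
Proof. intros Hy H. apply Rabs_le. split; nra. Qed.

Lemma polar_coordinates (a b : R) : 0 < a ^ 2 + b ^ 2 ->
  exists th, a = sqrt (a ^ 2 + b ^ 2) * cos th /\ b = sqrt (a ^ 2 + b ^ 2) * sin th.
Proof.
  intro H. set (rho := sqrt (a ^ 2 + b ^ 2)).
  assert (Hr : 0 < rho) by (apply sqrt_lt_R0; auto).
  assert (Hr2 : rho ^ 2 = a ^ 2 + b ^ 2) by (apply pow2_sqrt; lra).
  assert (Hab : -1 <= a / rho <= 1).
  { assert (Ha : Rabs a <= rho) by (apply sq_le_Rabs; pose proof (pow2_ge_0 b); lra).
    apply Rabs_le_between. unfold Rdiv. rewrite Rabs_mult, Rabs_inv, (Rabs_pos_eq rho) by lra.
    apply (Rmult_le_reg_r rho); [lra|]. rewrite Rmult_assoc, Rinv_l by lra. lra. }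
  assert (Hs : sqrt (1 - (a / rho)²) = Rabs b / rho).
  { apply sqrt_lem_1.
    - unfold Rsqr. set (u := a / rho) in *. destruct Hab. nra.
    - apply Rmult_le_pos; [apply Rabs_pos | left; apply Rinv_0_lt_compat; auto].
    - unfold Rsqr.
      replace (Rabs b / rho * (Rabs b / rho)) with (b ^ 2 / rho ^ 2)
        by (rewrite <- (pow2_abs b); field; lra).
      field_simplify_eq; lra. }
  destruct (Rle_or_lt 0 b) as [Hb0|Hb0].
  - exists (acos (a / rho)). rewrite cos_acos, sin_acos, Hs, Rabs_pos_eq by auto.
    split; field; lra.
  - exists (- acos (a / rho)). rewrite cos_neg, sin_neg, cos_acos, sin_acos, Hs, Rabs_left by auto.
    split; field; lra.
Qed.

Lemma cos_eq_1_2kPI (x : R) : cos x = 1 -> exists k : Z, x = 2 * IZR k * PI.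
Proof.
  intro H. assert (Hs : sin (x / 2) = 0).
  { replace x with (2 * (x / 2)) in H by field. rewrite cos_2a_sin in H.
    apply Rsqr_0_uniq. unfold Rsqr. lra. }
  destruct (sin_eq_0_0 _ Hs) as [k Hk]. exists k. lra.
Qed.

Lemma is_derive_continuity_pt (f : R -> R) (df t : R) : is_derive f t df -> continuity_pt f t.
Proof. intro H. apply continuity_pt_filterlim, (ex_derive_continuous f t). now exists df. Qed.

Lemma is_derive_continuity (f df : R -> R) : (forall t, is_derive f t (df t)) -> continuity f.
Proof. intros H t. exact (is_derive_continuity_pt f (df t) t (H t)). Qed.

Lemma continuity_pow2 (f : R -> R) : continuity f -> continuity (fun t => f t ^ 2).
Proof.
  intro H. change (continuity (fun t => f t * (f t * 1))).
  repeat apply continuity_mult; auto. now apply derivable_continuous, derivable_const.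
Qed.

Lemma derive_0_constant (f : R -> R) : (forall t, is_derive f t 0) -> forall t s, f t = f s.
Proof.
  intros H t s.
  destruct (MVT_gen f s t (fun _ => 0)) as [c [_ Hc]].
  - intros x _. apply H.
  - intros x _. apply (is_derive_continuity_pt f 0), H.
  - lra.
Qed.

Lemma MVT_interval (f df : R -> R) (a b : R) : a <= b ->
  (forall t, a <= t <= b -> is_derive f t (df t)) ->
  exists c, a <= c <= b /\ f b - f a = df c * (b - a).
Proof.
  intros Hab H. destruct (MVT_gen f a b df) as [c [Hc E]].
  - intros x Hx. apply H. rewrite Rmin_left, Rmax_right in Hx by lra. lra.
  - intros x Hx. rewrite Rmin_left, Rmax_right in Hx by lra.
    apply (is_derive_continuity_pt f (df x)), H. lra.
  - exists c. rewrite Rmin_left, Rmax_right in Hc by lra. auto.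
Qed.

Lemma derive_nonneg_le (f df : R -> R) (a b : R) : a <= b ->
  (forall t, a <= t <= b -> is_derive f t (df t)) ->
  (forall t, a <= t <= b -> 0 <= df t) -> f a <= f b.
Proof.
  intros Hab Hd Hp. destruct (MVT_interval f df a b Hab Hd) as [c [Hc E]].
  specialize (Hp c Hc). nra.
Qed.

Lemma derive_nonpos_ge (f df : R -> R) (a b : R) : a <= b ->
  (forall t, a <= t <= b -> is_derive f t (df t)) ->
  (forall t, a <= t <= b -> df t <= 0) -> f b <= f a.
Proof.
  intros Hab Hd Hp. destruct (MVT_interval f df a b Hab Hd) as [c [Hc E]].
  specialize (Hp c Hc). nra.
Qed.

Lemma derive_lower_bound_increment (f df : R -> R) (c : R) :
  (forall t, is_derive f t (df t)) -> (forall t, c <= df t) ->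
  forall a b, a <= b -> c * (b - a) <= f b - f a.
Proof.
  intros H Hp a b Hab. destruct (MVT_interval f df a b) as [d [_ E]]; auto.
  rewrite E. specialize (Hp d). nra.
Qed.

Lemma derive_upper_bound_increment (f df : R -> R) (c : R) :
  (forall t, is_derive f t (df t)) -> (forall t, df t <= c) ->
  forall a b, a <= b -> f b - f a <= c * (b - a).
Proof.
  intros H Hp a b Hab. destruct (MVT_interval f df a b) as [d [_ E]]; auto.
  rewrite E. specialize (Hp d). nra.
Qed.

Section PositiveDerivative.
Variables f df : R -> R.
Hypothesis Hf : forall t, is_derive f t (df t).
Hypothesis Hdf : forall t, 0 < df t.

Lemma derive_pos_lt (a b : R) : a < b -> f a < f b.
Proof.
  intro Hab. destruct (MVT_interval f df a b) as [c [_ E]]; auto; [lra|].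
  specialize (Hdf c). nra.
Qed.

Lemma derive_pos_le (a b : R) : a <= b -> f a <= f b.
Proof. intros [H|<-]; [left; now apply derive_pos_lt | lra]. Qed.

Lemma derive_pos_lt_inv (a b : R) : f a < f b -> a < b.
Proof. intro H. apply Rnot_le_lt. intro Hba. apply derive_pos_le in Hba. lra. Qed.

Lemma derive_pos_le_inv (a b : R) : f a <= f b -> a <= b.
Proof. intro H. apply Rnot_lt_le. intro Hba. apply derive_pos_lt in Hba. lra. Qed.

Lemma derive_pos_injective (a b : R) : f a = f b -> a = b.
Proof. intro H. apply Rle_antisym; apply derive_pos_le_inv; lra. Qed.

End PositiveDerivative.

Lemma is_derive_shift (f : R -> R) (T t d : R) :
  is_derive f (t + T) d -> is_derive (fun s => f (s + T)) t d.
Proof.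
  intro H. replace d with (scal 1 d) by (unfold scal; simpl; unfold mult; simpl; ring).
  apply (is_derive_comp f (fun s => s + T)); [exact H | auto_derive; auto].
Qed.

Lemma is_derive_periodic (f df : R -> R) (T : R) :
  (forall t, f (t + T) = f t) -> (forall t, is_derive f t (df t)) ->
  forall t, df (t + T) = df t.
Proof.
  intros Hp Hd t.
  assert (H : is_derive f t (df (t + T))).
  { apply (is_derive_ext (fun s => f (s + T))); [intro; apply Hp | apply is_derive_shift, Hd]. }
  rewrite <- (is_derive_unique _ _ _ H). apply is_derive_unique, Hd.
Qed.

Lemma lipschitz_continuity (f : R -> R) (K : R) : 0 <= K ->
  (forall x y, Rabs (f x - f y) <= K * Rabs (x - y)) -> continuity f.
Proof.
  intros HK H x eps Heps.
  exists (eps / (K + 1)). split; [apply Rdiv_lt_0_compat; lra|].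
  intros y [_ Hy]. simpl in *. unfold Rdist in *.
  apply (Rle_lt_trans _ (K * Rabs (y - x))); [apply H|].
  apply (Rle_lt_trans _ ((K + 1) * Rabs (y - x))); [pose proof (Rabs_pos (y - x)); nra|].
  replace eps with ((K + 1) * (eps / (K + 1))) by (field; lra).
  apply Rmult_lt_compat_l; lra.
Qed.

Definition angular_speed (P Q dP dQ : R -> R) (t : R) : R :=
  (P t * dQ t - Q t * dP t) / (P t ^ 2 + Q t ^ 2).

Definition is_polar_angle (P Q th : R -> R) : Prop :=
  forall t, P t = sqrt (P t ^ 2 + Q t ^ 2) * cos (th t) /\
            Q t = sqrt (P t ^ 2 + Q t ^ 2) * sin (th t).

Section AngleLifting.
Variables P Q dP dQ : R -> R.
Hypothesis HP : forall t, is_derive P t (dP t).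
Hypothesis HQ : forall t, is_derive Q t (dQ t).
Hypothesis Hpos : forall t, 0 < P t ^ 2 + Q t ^ 2.

Lemma angular_speed_continuity :
  continuity dP -> continuity dQ -> continuity (angular_speed P Q dP dQ).
Proof.
  intros HdP HdQ. pose proof (is_derive_continuity P dP HP). pose proof (is_derive_continuity Q dQ HQ).
  apply continuity_div; [| |intro t; specialize (Hpos t); lra].
  - apply continuity_minus; apply continuity_mult; auto.
  - apply continuity_plus; apply continuity_pow2; auto.
Qed.

Section Residuals.
Variable th : R -> R.
Hypothesis Hth : forall t, is_derive th t (angular_speed P Q dP dQ t).

Let rho t := sqrt (P t ^ 2 + Q t ^ 2).

Lemma polar_norm_pos t : 0 < rho t.
Proof. apply sqrt_lt_R0, Hpos. Qed.

Ltac residual_derive t :=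
  pose proof (Hpos t); pose proof (Hth t); pose proof (HP t); pose proof (HQ t);
  auto_derive;
  [ repeat split; try (eexists; eassumption); try nra; apply Rgt_not_eq, sqrt_lt_R0; nra
  | change (Derive (fun x => th x) t) with (Derive th t);
    change (Derive (fun x => P x) t) with (Derive P t);
    change (Derive (fun x => Q x) t) with (Derive Q t);
    rewrite (is_derive_unique _ _ _ (Hth t)), (is_derive_unique _ _ _ (HP t)),
            (is_derive_unique _ _ _ (HQ t));
    replace (P t * (P t * 1) + Q t * (Q t * 1)) with (P t ^ 2 + Q t ^ 2) by ring;
    pose proof (polar_norm_pos t); pose proof (sqrt_sqrt (P t ^ 2 + Q t ^ 2) (Rlt_le _ _ (Hpos t)));
    unfold angular_speed; fold (rho t) in *;
    match goal with E : rho t * rho t = _ |- _ => rewrite E end; field; lra ].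

Lemma cross_residual_derive_0 t :
  is_derive (fun t => (cos (th t) * Q t - sin (th t) * P t) / rho t) t 0.
Proof. unfold rho. residual_derive t. Qed.

Lemma dot_residual_derive_0 t :
  is_derive (fun t => (cos (th t) * P t + sin (th t) * Q t) / rho t) t 0.
Proof. unfold rho. residual_derive t. Qed.

(* The components of (P, Q) / |(P, Q)| along and across the direction [th]
   have zero derivative. *)
Lemma polar_angle_of_angular_speed (t0 : R) :
  P t0 = rho t0 * cos (th t0) -> Q t0 = rho t0 * sin (th t0) -> is_polar_angle P Q th.
Proof.
  intros HP0 HQ0 t. fold (rho t).
  pose proof (sin2_cos2 (th t0)) as Hsc0. pose proof (sin2_cos2 (th t)) as Hsc.
  unfold Rsqr in Hsc0, Hsc. pose proof (polar_norm_pos t0). pose proof (polar_norm_pos t).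
  assert (Ecross : cos (th t) * Q t - sin (th t) * P t = 0).
  { assert (E := derive_0_constant _ cross_residual_derive_0 t t0). simpl in E.
    rewrite HP0, HQ0 in E.
    replace ((cos (th t0) * (rho t0 * sin (th t0)) - sin (th t0) * (rho t0 * cos (th t0))) / rho t0)
      with 0 in E by (field; lra).
    apply (Rmult_eq_reg_r (/ rho t)); [|apply Rinv_neq_0_compat; lra].
    rewrite Rmult_0_l. exact E. }
  assert (Edot : cos (th t) * P t + sin (th t) * Q t = rho t).
  { assert (E := derive_0_constant _ dot_residual_derive_0 t t0). simpl in E.
    rewrite HP0, HQ0 in E.
    replace ((cos (th t0) * (rho t0 * cos (th t0)) + sin (th t0) * (rho t0 * sin (th t0))) / rho t0)
      with ((sin (th t0) * sin (th t0) + cos (th t0) * cos (th t0)) * rho t0 / rho t0) in E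
      by (field; lra).
    rewrite Hsc0, Rmult_1_l, Rdiv_diag in E by lra.
    apply (Rmult_eq_reg_r (/ rho t)); [|apply Rinv_neq_0_compat; lra].
    rewrite Rinv_r by lra. exact E. }
  set (c := cos (th t)) in *. set (s := sin (th t)) in *. split.
  - transitivity (c * (c * P t + s * Q t) - s * (c * Q t - s * P t)).
    + replace (P t) with (P t * (s * s + c * c)) at 1 by (rewrite Hsc; ring). ring.
    + rewrite Ecross, Edot. ring.
  - transitivity (s * (c * P t + s * Q t) + c * (c * Q t - s * P t)).
    + replace (Q t) with (Q t * (s * s + c * c)) at 1 by (rewrite Hsc; ring). ring.
    + rewrite Ecross, Edot. ring.
Qed.

End Residuals.

Lemma angle_lifting : continuity dP -> continuity dQ ->
  exists th : R -> R,
    (forall t, is_derive th t (angular_speed P Q dP dQ t)) /\ is_polar_angle P Q th.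
Proof.
  intros HdP HdQ.
  set (om := angular_speed P Q dP dQ).
  assert (Hom : continuity om) by now apply angular_speed_continuity.
  destruct (polar_coordinates (P 0) (Q 0) (Hpos 0)) as [th0 [H0a H0b]].
  set (th := fun t => th0 + RInt om 0 t).
  assert (Hth : forall t, is_derive th t (om t)).
  { intro t. unfold th. replace (om t) with (0 + om t) by ring.
    apply (is_derive_plus (fun _ => th0) (fun t => RInt om 0 t)).
    - apply (is_derive_const th0 t : is_derive (fun _ => th0) t 0).
    - apply (is_derive_RInt om (fun t => RInt om 0 t) 0).
      + apply filter_forall. intro y. apply (RInt_correct om 0 y).
        apply (ex_RInt_continuous om). intros z _. now apply continuity_pt_filterlim.
      + now apply continuity_pt_filterlim. }
  exists th. split; [exact Hth|].
  apply (polar_angle_of_angular_speed th Hth 0); unfold th; rewrite RInt_point, Rplus_0_r; auto.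
Qed.

Lemma polar_angle_period (th : R -> R) (T : R) :
  (forall t, P (t + T) = P t) -> (forall t, Q (t + T) = Q t) ->
  (forall t, is_derive th t (angular_speed P Q dP dQ t)) -> is_polar_angle P Q th ->
  exists k : Z, forall t, th (t + T) = th t + 2 * IZR k * PI.
Proof.
  intros HPT HQT Hd Hpol.
  assert (HdT : forall t, dP (t + T) = dP t) by exact (is_derive_periodic P dP T HPT HP).
  assert (HdQT : forall t, dQ (t + T) = dQ t) by exact (is_derive_periodic Q dQ T HQT HQ).
  assert (Hc : forall t, th (t + T) - th t = th (0 + T) - th 0).
  { intro t. apply (derive_0_constant (fun t => th (t + T) - th t)). intro s.
    replace 0 with (angular_speed P Q dP dQ (s + T) - angular_speed P Q dP dQ s)
      by (unfold angular_speed; rewrite HPT, HQT, HdT, HdQT; ring).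
    apply (is_derive_minus (fun t => th (t + T)) th); [apply is_derive_shift|]; apply Hd. }
  destruct (Hpol 0) as [A1 B1]. destruct (Hpol (0 + T)) as [A2 B2].
  rewrite !HPT, !HQT in A2, B2.
  assert (Hr : 0 < sqrt (P 0 ^ 2 + Q 0 ^ 2)) by (apply sqrt_lt_R0, Hpos).
  set (r := sqrt (P 0 ^ 2 + Q 0 ^ 2)) in *.
  assert (C : cos (th (0 + T)) = cos (th 0)) by (apply (Rmult_eq_reg_l r); lra).
  assert (S : sin (th (0 + T)) = sin (th 0)) by (apply (Rmult_eq_reg_l r); lra).
  destruct (cos_eq_1_2kPI (th (0 + T) - th 0)) as [k Hk].
  { rewrite cos_minus, C, S. pose proof (sin2_cos2 (th 0)). unfold Rsqr in H. lra. }
  exists k. intro t. specialize (Hc t). lra.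
Qed.

End AngleLifting.

Section MonotoneWinding.
Variables (vx vy al da : R -> R) (T : R) (k : Z).
Hypothesis HT : 0 < T.
Hypothesis Hvx : forall t, vx (t + T) = vx t.
Hypothesis Hvy : forall t, vy (t + T) = vy t.
Hypothesis Hcvx : continuity vx.
Hypothesis Hcvy : continuity vy.
Hypothesis Hal : forall t, is_derive al t (da t).
Hypothesis Hda_per : forall t, da (t + T) = da t.
Hypothesis Hda_cont : continuity da.
Hypothesis Hda_pos : forall t, 0 < da t.
Hypothesis Hpolar : is_polar_angle vx vy al.
Hypothesis Hturn : forall t, al (t + T) = al t + 2 * IZR k * PI.
Hypothesis Hinj : forall s t, 0 < t - s < T -> vx s = vx t -> vy s = vy t -> False.

Lemma winding_pos : (0 < k)%Z.
Proof.
  apply lt_0_IZR. pose proof (derive_pos_lt al da Hal Hda_pos 0 (0 + T) ltac:(lra)) as H.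
  rewrite Hturn in H. pose proof PI_RGT_0. nra.
Qed.

Lemma next_turn_exists :
  exists sg : R -> R, continuity sg /\
    forall t, t <= sg t <= t + T /\ al (sg t) = al t + 2 * PI.
Proof.
  pose proof PI_RGT_0. pose proof winding_pos as Hk.
  assert (Hk1 : 1 <= IZR k) by (apply IZR_le; lia).
  assert (Hcal : continuity al) by exact (is_derive_continuity al da Hal).
  destruct (periodic_min_attained da T HT Hda_cont Hda_per) as [tm Htm].
  destruct (periodic_max_attained da T HT Hda_cont Hda_per) as [tM HtM].
  set (c := da tm) in *. set (L := da tM) in *.
  assert (Hc : 0 < c) by apply Hda_pos.
  assert (HL : 0 < L) by apply Hda_pos.
  assert (Hex : forall t, {s | t <= s <= t + T /\ al s = al t + 2 * PI}).
  { intro t. destruct (IVT_gen al t (t + T) (al t + 2 * PI) Hcal) as [s [Hs1 Hs2]].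
    - rewrite Hturn, Rmin_left, Rmax_right; nra.
    - exists s. rewrite Rmin_left, Rmax_right in Hs1 by lra. auto. }
  exists (fun t => proj1_sig (Hex t)). split.
  2:{ intro t. exact (proj2_sig (Hex t)). }
  (* the inverse of a function with derivative in [c, L] is (L / c)-Lipschitz *)
  apply (lipschitz_continuity _ (L / c)); [apply Rlt_le, Rdiv_lt_0_compat; lra|].
  intros x y. destruct (proj2_sig (Hex x)) as [_ Ex], (proj2_sig (Hex y)) as [_ Ey].
  set (sx := proj1_sig (Hex x)) in *. set (sy := proj1_sig (Hex y)) in *.
  apply (Rmult_le_reg_l c); [exact Hc|].
  replace (c * (L / c * Rabs (x - y))) with (L * Rabs (x - y)) by (field; lra).
  assert (Hal_xy : Rabs (al sx - al sy) = Rabs (al x - al y))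
    by (rewrite Ex, Ey; f_equal; ring).
  assert (Hgrowth : forall a b, c * Rabs (a - b) <= Rabs (al a - al b) <= L * Rabs (a - b)).
  { intros a b. destruct (Rle_or_lt b a) as [H1|H1].
    - pose proof (derive_lower_bound_increment al da c Hal Htm b a H1).
      pose proof (derive_upper_bound_increment al da L Hal HtM b a H1).
      rewrite !Rabs_pos_eq; nra.
    - pose proof (derive_lower_bound_increment al da c Hal Htm a b (Rlt_le _ _ H1)).
      pose proof (derive_upper_bound_increment al da L Hal HtM a b (Rlt_le _ _ H1)).
      rewrite !Rabs_left; nra. }
  destruct (Hgrowth sx sy) as [H1 _]. destruct (Hgrowth x y) as [_ H2]. lra.
Qed.

Lemma monotone_angle_winds_once : k = 1%Z.
Proof.
  pose proof PI_RGT_0. pose proof winding_pos as Hk0.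
  destruct (Z.eq_dec k 1) as [|Hne]; auto. exfalso.
  assert (Hk2 : 2 <= IZR k) by (apply IZR_le; lia).
  destruct next_turn_exists as [sg [Hcsg Hsg]].
  set (N := fun t => vx t ^ 2 + vy t ^ 2).
  set (d := fun t => N t - N (sg t)).
  assert (Hcd : continuity d).
  { apply continuity_minus; [|apply (continuity_comp sg N); auto];
      apply continuity_plus; apply continuity_pow2; auto. }
  destruct (classic (exists t, d t = 0)) as [[ts Hts]|Hno].
  - (* equal radii and angles differing by 2 pi: a double point within a period *)
    destruct (Hsg ts) as [[Hs1 Hs2] Es]. set (s := sg ts) in *.
    assert (Hs3 : s <> ts) by (intro E; rewrite E in Es; lra).
    assert (Hs4 : s <> ts + T).
    { intro E. rewrite E, Hturn in Es. nra. }
    assert (HN : N s = N ts) by (unfold d in Hts; fold s in Hts; lra).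
    destruct (Hpolar ts) as [A1 B1]. destruct (Hpolar s) as [A2 B2].
    fold (N ts) in A1, B1. fold (N s) in A2, B2. rewrite HN, Es in A2, B2.
    rewrite cos_plus, cos_2PI, sin_2PI in A2. rewrite sin_plus, cos_2PI, sin_2PI in B2.
    apply (Hinj ts s); lra.
  - (* otherwise N decreases (or increases) strictly along the k turns of a period *)
    assert (Hsign : forall t, 0 < d 0 * d t).
    { apply continuity_nonzero_same_sign; auto. intros t E. apply Hno. eauto. }
    assert (Hit : forall j, al (Nat.iter j sg 0) = al 0 + 2 * INR j * PI /\
                  (j = 0%nat \/ d 0 * N (Nat.iter j sg 0) < d 0 * N 0)).
    { induction j as [|j [IH1 IH2]].
      - simpl. split; [ring | auto].
      - simpl Nat.iter. destruct (Hsg (Nat.iter j sg 0)) as [_ E]. split.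
        + rewrite E, IH1, S_INR. ring.
        + right. specialize (Hsign (Nat.iter j sg 0)). set (e := d 0) in *. unfold d in Hsign.
          destruct IH2 as [->|IH2]; simpl in *; nra. }
    destruct (Hit (Z.to_nat k)) as [E1 [E2|E2]]; [lia|].
    rewrite INR_IZR_INZ, Z2Nat.id in E1 by lia.
    assert (Eq : Nat.iter (Z.to_nat k) sg 0 = 0 + T).
    { apply (derive_pos_injective al da Hal Hda_pos). rewrite E1, Hturn. ring. }
    rewrite Eq in E2. unfold N in E2. rewrite Hvx, Hvy in E2. lra.
Qed.

End MonotoneWinding.

Lemma cos_lt_interval (a x b k : R) : - (PI / 2) <= a -> a <= x -> x <= b -> b <= PI / 2 ->
  k < cos a -> k < cos b -> k < cos x.
Proof.
  intros H1 H2 H3 H4 Ha Hb. pose proof PI_RGT_0.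
  destruct (Rle_or_lt 0 x) as [Hx|Hx].
  - destruct (Req_dec x b) as [->|E]; auto.
    assert (cos b < cos x) by (apply cos_decreasing_1; lra). lra.
  - rewrite <- cos_neg. rewrite <- cos_neg in Ha.
    destruct (Req_dec x a) as [->|E]; auto.
    assert (cos (- a) < cos (- x)) by (apply cos_decreasing_1; lra). lra.
Qed.

(* Up to a positive factor, the tangency condition seen from the far point
   O + r (cos beta, sin beta) is [tangency_fun th m beta r t = 0] (see
   [tang_det_on_ray]); a window is a half-turn of [th] centred at [beta]. *)
Definition tangency_fun (th m : R -> R) (beta r t : R) : R := r * sin (beta - th t) + m t.

Definition in_window (th : R -> R) (beta t : R) : Prop := beta - PI / 2 <= th t <= beta + PI / 2.

Section TangencyWindow.
Variables (th om m w : R -> R) (beta r B : R).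
Hypothesis Hth : forall t, is_derive th t (om t).
Hypothesis Hom : forall t, 0 < om t.
Hypothesis Hm : forall t, is_derive m t (om t * w t).
Hypothesis HmB : forall t, Rabs (m t) <= B.
Hypothesis HwB : forall t, Rabs (w t) <= B.
Hypothesis Hr : 2 * B < r.

Let G := tangency_fun th m beta r.

Lemma is_derive_tangency_fun t : is_derive G t (om t * (w t - r * cos (beta - th t))).
Proof.
  unfold G, tangency_fun. auto_derive.
  - repeat split; eexists; [exact (Hth t) | exact (Hm t)].
  - replace (Derive (fun x => th x) t) with (om t) by (symmetry; apply is_derive_unique, Hth).
    replace (Derive (fun x => m x) t) with (om t * w t) by (symmetry; apply is_derive_unique, Hm).
    unfold Rminus. ring.
Qed.

Lemma window_zero_cos_gt t : in_window th beta t -> G t = 0 -> 1 / 2 < cos (beta - th t).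
Proof.
  intros Ht E. unfold in_window, G, tangency_fun in *.
  pose proof (cos_ge_0 (beta - th t) ltac:(lra) ltac:(lra)) as Hc0.
  pose proof (HmB t) as Hb. apply Rabs_le_between in Hb.
  pose proof (sin2_cos2 (beta - th t)) as Hsc. unfold Rsqr in Hsc.
  set (s := sin (beta - th t)) in *. set (c := cos (beta - th t)) in *.
  assert (HB0 : 0 <= B) by (pose proof (Rabs_pos (m t)); lra).
  assert (Hrs : (r * s) * (r * s) <= B * B) by (replace (r * s) with (- m t) by lra; nra).
  apply Rnot_le_lt. intro Hc. assert (s * s >= 3 / 4) by nra. nra.
Qed.

(* Between two zeros, G' = om (w - r cos(beta - th)) would vanish, but there
   cos(beta - th) > 1/2 and |w| <= B < r / 2. *)
Lemma window_zero_unique t1 t2 : in_window th beta t1 -> in_window th beta t2 ->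
  G t1 = 0 -> G t2 = 0 -> t1 = t2.
Proof.
  assert (Hlt : forall a b, a < b -> in_window th beta a -> in_window th beta b ->
                            G a = 0 -> G b = 0 -> False).
  { intros a b Hab Wa Wb Ea Eb.
    pose proof (window_zero_cos_gt a Wa Ea). pose proof (window_zero_cos_gt b Wb Eb).
    destruct (MVT_interval G _ a b (Rlt_le _ _ Hab) (fun t _ => is_derive_tangency_fun t))
      as [xi [Hxi Exi]].
    rewrite Ea, Eb in Exi.
    assert (Hxi0 : om xi * (w xi - r * cos (beta - th xi)) = 0)
      by (apply (Rmult_eq_reg_r (b - a)); lra).
    apply Rmult_integral in Hxi0. destruct Hxi0 as [Hz|Hz]; [specialize (Hom xi); lra|].
    pose proof (derive_pos_le th om Hth Hom a xi ltac:(lra)).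
    pose proof (derive_pos_le th om Hth Hom xi b ltac:(lra)).
    unfold in_window in *.
    assert (1 / 2 < cos (beta - th xi)) by (apply (cos_lt_interval (beta - th b) _ (beta - th a)); lra).
    pose proof (HwB xi) as Hw. apply Rabs_le_between in Hw. nra. }
  intros W1 W2 E1 E2. destruct (Rtotal_order t1 t2) as [H|[H|H]]; auto; exfalso;
    [apply (Hlt t1 t2) | apply (Hlt t2 t1)]; auto.
Qed.

Lemma window_zero_exists tlo thi : tlo < thi ->
  th tlo = beta - PI / 2 -> th thi = beta + PI / 2 ->
  exists t, tlo < t < thi /\ G t = 0.
Proof.
  intros Hlh E1 E2.
  assert (HGc : continuity G) by exact (is_derive_continuity G _ is_derive_tangency_fun).
  assert (HB0 : 0 <= B) by (pose proof (Rabs_pos (m tlo)) as H; pose proof (HmB tlo); lra).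
  assert (G1 : 0 < G tlo).
  { unfold G, tangency_fun. rewrite E1. replace (beta - (beta - PI / 2)) with (PI / 2) by ring.
    rewrite sin_PI2. pose proof (HmB tlo) as H. apply Rabs_le_between in H. lra. }
  assert (G2 : G thi < 0).
  { unfold G, tangency_fun. rewrite E2. replace (beta - (beta + PI / 2)) with (- (PI / 2)) by ring.
    rewrite sin_neg, sin_PI2. pose proof (HmB thi) as H. apply Rabs_le_between in H. lra. }
  destruct (IVT_cor G tlo thi HGc (Rlt_le _ _ Hlh)) as [z [Hz Ez]]; [nra|].
  exists z. split; [|exact Ez].
  split; apply Rnot_le_lt; intro; (assert (z = tlo \/ z = thi) as [->| ->] by lra); lra.
Qed.

(* At a zero, |r sin(beta - th)| = |m| <= B, so th is within O(1/r) of beta. *)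
Lemma window_zero_near_center t : in_window th beta t -> G t = 0 ->
  1 - cos (beta - th t) <= B ^ 2 / r ^ 2.
Proof.
  intros Ht E. unfold in_window, G, tangency_fun in *.
  assert (Hc : 0 <= cos (beta - th t)) by (apply cos_ge_0; lra).
  assert (HB0 : 0 <= B) by (pose proof (Rabs_pos (m t)); pose proof (HmB t); lra).
  pose proof (sin2_cos2 (beta - th t)) as Hsc. unfold Rsqr in Hsc.
  pose proof (COS_bound (beta - th t)) as [_ Hc1].
  assert (Hms : m t ^ 2 <= B ^ 2).
  { rewrite <- (pow2_abs (m t)). pose proof (HmB t). pose proof (Rabs_pos (m t)). nra. }
  assert (1 - cos (beta - th t) <= sin (beta - th t) ^ 2) by nra.
  assert (sin (beta - th t) ^ 2 <= B ^ 2 / r ^ 2).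
  { apply (Rmult_le_reg_r (r ^ 2)); [nra|].
    replace (B ^ 2 / r ^ 2 * r ^ 2) with (B ^ 2) by (field; lra).
    replace (sin (beta - th t) ^ 2 * r ^ 2) with (m t ^ 2) by nra. exact Hms. }
  lra.
Qed.

End TangencyWindow.

(* [h + (L / c) cos(beta - th)] is nonincreasing away from the point where
   [th = beta], since its derivative is [sin(th - beta) (rho - (L / c) th')]. *)
Lemma height_near_minimum (th om h rho : R -> R) (beta L c : R) :
  (forall t, is_derive th t (om t)) -> (forall t, c <= om t) -> 0 < c ->
  (forall t, is_derive h t (rho t * sin (th t - beta))) -> (forall t, rho t <= L) -> 0 <= L ->
  forall tb ts, th tb = beta -> in_window th beta ts ->
  h ts - h tb <= L / c * (1 - cos (beta - th ts)).
Proof.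
  intros Hth Hom Hc Hh Hrho HL tb ts Etb Wts. unfold in_window in Wts.
  assert (Hom' : forall t, 0 < om t) by (intro t; specialize (Hom t); lra).
  set (K := fun t => h t + L / c * cos (beta - th t)).
  set (dK := fun t => sin (th t - beta) * (rho t - L / c * om t)).
  assert (HdK : forall t, is_derive K t (dK t)).
  { intro t. unfold K, dK. auto_derive.
    - repeat split; eexists; [apply Hh | apply Hth].
    - replace (Derive (fun x => th x) t) with (om t) by (symmetry; apply is_derive_unique, Hth).
      replace (Derive (fun x => h x) t) with (rho t * sin (th t - beta))
        by (symmetry; apply is_derive_unique, Hh).
      replace (beta + - th t) with (- (th t - beta)) by ring. rewrite sin_neg. ring. }
  assert (Hneg : forall t, rho t - L / c * om t <= 0).
  { intro t. specialize (Hrho t). specialize (Hom t).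
    assert (L / c * c <= L / c * om t) by (apply Rmult_le_compat_l; auto; apply Rdiv_le_0_compat; lra).
    replace (L / c * c) with L in H by (field; lra). lra. }
  assert (HK : K ts <= K tb).
  { destruct (Rle_or_lt tb ts) as [H|H].
    - apply (derive_nonpos_ge K dK tb ts H); [intros; apply HdK|].
      intros t Ht. unfold dK.
      pose proof (derive_pos_le th om Hth Hom' tb t ltac:(lra)).
      pose proof (derive_pos_le th om Hth Hom' t ts ltac:(lra)).
      assert (0 <= sin (th t - beta)) by (apply sin_ge_0; lra).
      specialize (Hneg t). nra.
    - apply (derive_nonneg_le K dK ts tb (Rlt_le _ _ H)); [intros; apply HdK|].
      intros t Ht. unfold dK.
      pose proof (derive_pos_le th om Hth Hom' ts t ltac:(lra)).
      pose proof (derive_pos_le th om Hth Hom' t tb ltac:(lra)).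
      assert (0 <= sin (beta - th t)) by (apply sin_ge_0; lra).
      replace (th t - beta) with (- (beta - th t)) by ring. rewrite sin_neg.
      specialize (Hneg t). nra. }
  unfold K in HK. rewrite Etb, Rminus_diag, cos_0 in HK. lra.
Qed.

Lemma cot_half_acos (c : R) : -1 < c < 1 -> cot (acos c / 2) = (1 + c) / sqrt (1 - c²).
Proof.
  intro Hc. set (x := acos c).
  assert (Hx : 0 <= x <= PI) by apply acos_bound.
  assert (Hcx : cos x = c) by (apply cos_acos; lra).
  assert (Hsx : sin x = sqrt (1 - c²)) by (apply sin_acos; lra).
  assert (Hx0 : x <> 0) by (intro E; rewrite E, cos_0 in Hcx; lra).
  assert (HxP : x <> PI) by (intro E; rewrite E, cos_PI in Hcx; lra).
  assert (Hs : 0 < sin (x / 2)) by (apply sin_gt_0; lra).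
  assert (Hco : 0 < cos (x / 2)) by (apply cos_gt_0; lra).
  rewrite <- Hsx, <- Hcx. replace x with (2 * (x / 2)) at 2 3 by field.
  rewrite sin_2a, cos_2a_cos. unfold cot. field. lra.
Qed.

Lemma C_A_sym ax ay px py qx qy : C_A ax ay px py qx qy = C_A ax ay qx qy px py.
Proof.
  unfold C_A, angle_at, dot2.
  rewrite (Rmult_comm (dist2 ax ay px py)), (Rplus_comm (/ dist2 ax ay px py)).
  replace ((px - ax) * (qx - ax) + (py - ay) * (qy - ay))
    with ((qx - ax) * (px - ax) + (qy - ay) * (py - ay)) by ring.
  reflexivity.
Qed.

(* With a = P - A and b = Q - A: cot(phi/2) = (|a||b| + a.b) / |a x b|. *)
Lemma C_A_cartesian ax ay px py qx qy :
  let a1 := px - ax in let a2 := py - ay in let b1 := qx - ax in let b2 := qy - ay in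
  let na := sqrt (a1 ^ 2 + a2 ^ 2) in let nb := sqrt (b1 ^ 2 + b2 ^ 2) in
  let dd := a1 * b2 - a2 * b1 in
  0 < na -> 0 < nb -> dd <> 0 ->
  C_A ax ay px py qx qy = (na * nb + (a1 * b1 + a2 * b2)) / Rabs dd * (/ na + / nb).
Proof.
  intros a1 a2 b1 b2 na nb dd Ha Hb Hd.
  assert (Ea : na * na = a1 ^ 2 + a2 ^ 2) by (apply sqrt_sqrt; nra).
  assert (Eb : nb * nb = b1 ^ 2 + b2 ^ 2) by (apply sqrt_sqrt; nra).
  set (c := (a1 * b1 + a2 * b2) / (na * nb)).
  assert (Hlagrange : (na * nb) ^ 2 = (a1 * b1 + a2 * b2) ^ 2 + dd ^ 2).
  { replace ((na * nb) ^ 2) with ((na * na) * (nb * nb)) by ring. rewrite Ea, Eb. unfold dd. ring. }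
  assert (Hc2 : 1 - c² = (dd / (na * nb)) ^ 2).
  { unfold Rsqr, c.
    replace (1 - (a1 * b1 + a2 * b2) / (na * nb) * ((a1 * b1 + a2 * b2) / (na * nb)))
      with (((na * nb) ^ 2 - (a1 * b1 + a2 * b2) ^ 2) / (na * nb) ^ 2) by (field; split; lra).
    rewrite Hlagrange at 1. field. split; lra. }
  assert (Hc : -1 < c < 1).
  { assert (0 < (dd / (na * nb)) ^ 2).
    { apply pow2_gt_0. unfold Rdiv. apply Rmult_integral_contrapositive_currified; [exact Hd|].
      apply Rinv_neq_0_compat. nra. }
    unfold Rsqr in Hc2. split; nra. }
  unfold C_A, angle_at, dist2, dot2. fold a1 a2 b1 b2 na nb. fold c.
  rewrite cot_half_acos, Hc2, <- Rsqr_pow2, sqrt_Rsqr_abs by auto.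
  unfold c. rewrite Rabs_div, (Rabs_pos_eq (na * nb)) by nra.
  field. repeat split; try lra. now apply Rabs_no_R0.
Qed.

Lemma C_A_normalized_close (W eps : R) : 0 < W -> 0 < eps -> exists d, 0 < d /\
  forall a1 a2 a3 a4, Rabs (a1 - 1) <= d -> Rabs (a2 - 1) <= d -> Rabs (a3 - 1) <= d ->
    Rabs (a4 - W) <= d ->
    Rabs ((a1 * a2 + a3) * (a1 + a2) / (a4 * (a1 * a2)) - 4 / W) < eps.
Proof.
  intros HW He.
  set (K := 8 * (28 * W + 16)).
  assert (HK : 0 < K) by (unfold K; lra).
  assert (HeW2 : 0 < eps * W ^ 2) by (apply Rmult_lt_0_compat; [lra | apply pow2_gt_0; lra]).
  assert (HeW : 0 < eps * W ^ 2 / K) by (apply Rdiv_lt_0_compat; lra).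
  set (d := Rmin (1 / 6) (Rmin (W / 2) (eps * W ^ 2 / K))).
  assert (Hd1 : d <= 1 / 6) by apply Rmin_l.
  assert (Hd2 : d <= W / 2) by (eapply Rle_trans; [apply Rmin_r | apply Rmin_l]).
  assert (Hd3 : d <= eps * W ^ 2 / K) by (eapply Rle_trans; [apply Rmin_r | apply Rmin_r]).
  assert (Hd0 : 0 < d) by (repeat apply Rmin_glb_lt; lra).
  exists d. split; auto.
  intros a1 a2 a3 a4 H1 H2 H3 H4.
  apply Rabs_le_between in H1, H2, H3, H4.
  assert (P12 : -3 * d <= a1 * a2 - 1 <= 3 * d) by (split; nra).
  assert (HN : -16 * d <= (a1 * a2 + a3) * (a1 + a2) - 4 <= 16 * d).
  { replace ((a1 * a2 + a3) * (a1 + a2) - 4)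
      with ((a1 * a2 + a3 - 2) * (a1 + a2) + 2 * (a1 + a2 - 2)) by ring.
    split; nra. }
  assert (HD : - d * (3 * W + 4) <= a4 * (a1 * a2) - W <= d * (3 * W + 4)).
  { replace (a4 * (a1 * a2) - W) with ((a1 * a2 - 1) * a4 + (a4 - W)) by ring. split; nra. }
  assert (HDp : W / 4 <= a4 * (a1 * a2)) by nra.
  set (N := (a1 * a2 + a3) * (a1 + a2)) in *. set (D := a4 * (a1 * a2)) in *.
  replace (N / D - 4 / W) with (((N - 4) * W - 4 * (D - W)) / (D * W)) by (field; lra).
  rewrite Rabs_div, (Rabs_pos_eq (D * W)) by nra.
  apply (Rle_lt_trans _ ((16 * d * W + 4 * (d * (3 * W + 4))) / (W / 4 * W))).
  - apply Rmult_le_compat.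
    + apply Rabs_pos.
    + left; apply Rinv_0_lt_compat; nra.
    + apply Rabs_le. split; nra.
    + apply Rinv_le_contravar; nra.
  - replace ((16 * d * W + 4 * (d * (3 * W + 4))) / (W / 4 * W)) with (d * (K / 2) / W ^ 2)
      by (unfold K; field; lra).
    apply (Rmult_lt_reg_r (W ^ 2)); [nra|].
    replace (d * (K / 2) / W ^ 2 * W ^ 2) with (d * (K / 2)) by (field; lra).
    apply (Rle_lt_trans _ (eps * W ^ 2 / K * (K / 2))); [apply Rmult_le_compat_r; lra|].
    replace (eps * W ^ 2 / K * (K / 2)) with (eps * W ^ 2 / 2) by (field; lra). lra.
Qed.

Lemma dot_cross_le (s p1 p2 q1 q2 : R) : 0 <= s ->
  p1 ^ 2 + p2 ^ 2 <= s ^ 2 -> q1 ^ 2 + q2 ^ 2 <= s ^ 2 ->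
  Rabs (p1 * q1 + p2 * q2) <= s ^ 2 /\ Rabs (p1 * q2 - p2 * q1) <= s ^ 2.
Proof.
  intros Hs Hp Hq.
  assert (Hlagrange : (p1 * q1 + p2 * q2) ^ 2 + (p1 * q2 - p2 * q1) ^ 2
                      = (p1 ^ 2 + p2 ^ 2) * (q1 ^ 2 + q2 ^ 2)) by ring.
  assert ((p1 ^ 2 + p2 ^ 2) * (q1 ^ 2 + q2 ^ 2) <= s ^ 2 * s ^ 2)
    by (apply Rmult_le_compat; nra).
  pose proof (pow2_ge_0 (p1 * q1 + p2 * q2)). pose proof (pow2_ge_0 (p1 * q2 - p2 * q1)).
  split; apply sq_le_Rabs; nra.
Qed.

Section FarObserver.
Variables (r c sn s : R).
Hypothesis Hunit : sn ^ 2 + c ^ 2 = 1.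
Hypothesis Hr : 1 <= r.
Hypothesis Hs : 0 <= s.

Lemma far_proj_le (p1 p2 : R) : p1 ^ 2 + p2 ^ 2 <= s ^ 2 -> Rabs (p1 * c + p2 * sn) <= s.
Proof.
  intro Hp. apply sq_le_Rabs; auto.
  assert (E : (p1 * c + p2 * sn) ^ 2 + (- p1 * sn + p2 * c) ^ 2 = (p1 ^ 2 + p2 ^ 2) * (sn ^ 2 + c ^ 2))
    by ring.
  rewrite Hunit in E. pose proof (pow2_ge_0 (- p1 * sn + p2 * c)). lra.
Qed.

Lemma far_norm_ratio (p1 p2 : R) : p1 ^ 2 + p2 ^ 2 <= s ^ 2 ->
  Rabs (sqrt ((p1 - r * c) ^ 2 + (p2 - r * sn) ^ 2) / r - 1) <= (s ^ 2 + 2 * s) / r.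
Proof.
  intro Hp. pose proof (far_proj_le p1 p2 Hp) as Hu. apply Rabs_le_between in Hu.
  set (n := sqrt ((p1 - r * c) ^ 2 + (p2 - r * sn) ^ 2)).
  assert (Hn0 : 0 <= n) by apply sqrt_pos.
  assert (En : n ^ 2 - r ^ 2 = p1 ^ 2 + p2 ^ 2 - 2 * r * (p1 * c + p2 * sn)).
  { unfold n. rewrite pow2_sqrt
      by (pose proof (pow2_ge_0 (p1 - r * c)); pose proof (pow2_ge_0 (p2 - r * sn)); lra).
    replace (r ^ 2) with (r ^ 2 * (sn ^ 2 + c ^ 2)) by (rewrite Hunit; ring). ring. }
  replace (n / r - 1) with ((n ^ 2 - r ^ 2) / (r * (n + r))) by (field; lra).
  rewrite Rabs_div, (Rabs_pos_eq (r * (n + r))) by nra.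
  apply (Rmult_le_reg_r (r * (n + r))); [nra|].
  replace (Rabs (n ^ 2 - r ^ 2) / (r * (n + r)) * (r * (n + r))) with (Rabs (n ^ 2 - r ^ 2))
    by (field; nra).
  replace ((s ^ 2 + 2 * s) / r * (r * (n + r))) with ((s ^ 2 + 2 * s) * (n + r)) by (field; lra).
  apply Rabs_le. rewrite En. split; nra.
Qed.

Lemma far_dot_ratio (p1 p2 q1 q2 : R) : p1 ^ 2 + p2 ^ 2 <= s ^ 2 -> q1 ^ 2 + q2 ^ 2 <= s ^ 2 ->
  Rabs (((p1 - r * c) * (q1 - r * c) + (p2 - r * sn) * (q2 - r * sn)) / r ^ 2 - 1)
    <= (s ^ 2 + 2 * s) / r.
Proof.
  intros Hp Hq.
  pose proof (far_proj_le p1 p2 Hp) as Hu. pose proof (far_proj_le q1 q2 Hq) as Hv.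
  destruct (dot_cross_le s p1 p2 q1 q2 Hs Hp Hq) as [Hpq _].
  apply Rabs_le_between in Hu, Hv, Hpq.
  replace (((p1 - r * c) * (q1 - r * c) + (p2 - r * sn) * (q2 - r * sn)) / r ^ 2 - 1)
    with (((p1 - r * c) * (q1 - r * c) + (p2 - r * sn) * (q2 - r * sn)
           - r ^ 2 * (sn ^ 2 + c ^ 2)) / r ^ 2) by (rewrite Hunit; field; lra).
  replace ((p1 - r * c) * (q1 - r * c) + (p2 - r * sn) * (q2 - r * sn) - r ^ 2 * (sn ^ 2 + c ^ 2))
    with (p1 * q1 + p2 * q2 - r * (p1 * c + p2 * sn) - r * (q1 * c + q2 * sn)) by ring.
  rewrite Rabs_div, (Rabs_pos_eq (r ^ 2)) by nra.
  apply (Rmult_le_reg_r (r ^ 2)); [nra|].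
  replace ((s ^ 2 + 2 * s) / r * r ^ 2) with ((s ^ 2 + 2 * s) * r) by (field; lra).
  replace (Rabs (p1 * q1 + p2 * q2 - r * (p1 * c + p2 * sn) - r * (q1 * c + q2 * sn)) / r ^ 2 * r ^ 2)
    with (Rabs (p1 * q1 + p2 * q2 - r * (p1 * c + p2 * sn) - r * (q1 * c + q2 * sn)))
    by (field; lra).
  apply Rabs_le. split; nra.
Qed.

(* The cross product of the two tangent segments is r times the separation of
   P and Q across the direction (c, sn), up to the bounded term p x q. *)
Lemma far_cross_ratio (p1 p2 q1 q2 W E : R) :
  p1 ^ 2 + p2 ^ 2 <= s ^ 2 -> q1 ^ 2 + q2 ^ 2 <= s ^ 2 -> 0 < W -> 0 <= E ->
  Rabs ((q1 * - sn + q2 * c) - (p1 * - sn + p2 * c) - W) <= E / r ^ 2 ->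
  Rabs (Rabs ((p1 - r * c) * (q2 - r * sn) - (p2 - r * sn) * (q1 - r * c)) / r - W)
    <= (s ^ 2 + E) / r.
Proof.
  intros Hp Hq HW HE He.
  destruct (dot_cross_le s p1 p2 q1 q2 Hs Hp Hq) as [_ Hpq].
  set (dd := (p1 - r * c) * (q2 - r * sn) - (p2 - r * sn) * (q1 - r * c)).
  set (e := (q1 * - sn + q2 * c) - (p1 * - sn + p2 * c) - W) in *.
  assert (Edd : dd + r * W = (p1 * q2 - p2 * q1) - r * e) by (unfold dd, e; ring).
  assert (Hre : Rabs (r * e) <= E).
  { rewrite Rabs_mult, Rabs_pos_eq by lra.
    apply Rle_trans with (r * (E / r ^ 2)); [apply Rmult_le_compat_l; lra|].
    replace (r * (E / r ^ 2)) with (E / r) by (field; lra).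
    apply (Rmult_le_reg_r r); [lra|]. replace (E / r * r) with E by (field; lra). nra. }
  assert (Hb : Rabs (Rabs dd - r * W) <= s ^ 2 + E).
  { eapply Rle_trans; [|apply (Rle_trans _ (Rabs (dd + r * W)))].
    - apply Rle_refl.
    - replace (dd + r * W) with (dd - (- (r * W))) by ring.
      rewrite <- (Rabs_pos_eq (r * W)) at 1 by nra. rewrite <- (Rabs_Ropp (r * W)).
      apply Rabs_triang_inv2.
    - rewrite Edd. eapply Rle_trans; [apply Rabs_triang|]. rewrite Rabs_Ropp. lra. }
  replace (Rabs dd / r - W) with ((Rabs dd - r * W) / r) by (field; lra).
  rewrite Rabs_div, (Rabs_pos_eq r) by lra.
  apply Rmult_le_compat_r; [left; apply Rinv_0_lt_compat; lra | exact Hb].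
Qed.

End FarObserver.

(* The observer is A = O + r (cos psi, sin psi); C_A is the rational function of
   [C_A_normalized_close] evaluated near its limit point (1, 1, 1, W). *)
Lemma C_A_far_normalized (s W E r psi ox oy px py qx qy : R) :
  0 <= s -> 0 <= E -> 1 <= r ->
  (s ^ 2 + 2 * s + E) / r <= 1 / 6 -> (s ^ 2 + 2 * s + E) / r < W ->
  (px - ox) ^ 2 + (py - oy) ^ 2 <= s ^ 2 -> (qx - ox) ^ 2 + (qy - oy) ^ 2 <= s ^ 2 ->
  Rabs (((qx - ox) * - sin psi + (qy - oy) * cos psi)
        - ((px - ox) * - sin psi + (py - oy) * cos psi) - W) <= E / r ^ 2 ->
  exists a1 a2 a3 a4,
    Rabs (a1 - 1) <= (s ^ 2 + 2 * s + E) / r /\ Rabs (a2 - 1) <= (s ^ 2 + 2 * s + E) / r /\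
    Rabs (a3 - 1) <= (s ^ 2 + 2 * s + E) / r /\ Rabs (a4 - W) <= (s ^ 2 + 2 * s + E) / r /\
    C_A (ox + r * cos psi) (oy + r * sin psi) px py qx qy
      = (a1 * a2 + a3) * (a1 + a2) / (a4 * (a1 * a2)).
Proof.
  intros Hs HE Hr Hd16 HdW Hp Hq He.
  set (K := s ^ 2 + 2 * s + E) in *.
  assert (Hunit : sin psi ^ 2 + cos psi ^ 2 = 1) by (rewrite <- !Rsqr_pow2; apply sin2_cos2).
  assert (Hbound : forall x y, 0 <= x -> Rabs y <= x / r -> x <= K -> Rabs y <= K / r).
  { intros x y Hx Hy HxK. apply (Rle_trans _ (x / r)); auto.
    apply Rmult_le_compat_r; [left; apply Rinv_0_lt_compat|]; lra. }
  set (a1 := px - (ox + r * cos psi)). set (a2 := py - (oy + r * sin psi)).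
  set (b1 := qx - (ox + r * cos psi)). set (b2 := qy - (oy + r * sin psi)).
  set (na := sqrt (a1 ^ 2 + a2 ^ 2)). set (nb := sqrt (b1 ^ 2 + b2 ^ 2)).
  set (dt := a1 * b1 + a2 * b2). set (dd := a1 * b2 - a2 * b1).
  assert (H1 : Rabs (na / r - 1) <= K / r).
  { apply (Hbound (s ^ 2 + 2 * s)); [nra | | unfold K; lra].
    unfold na. replace a1 with ((px - ox) - r * cos psi) by (unfold a1; ring).
    replace a2 with ((py - oy) - r * sin psi) by (unfold a2; ring).
    apply far_norm_ratio; auto; lra. }
  assert (H2 : Rabs (nb / r - 1) <= K / r).
  { apply (Hbound (s ^ 2 + 2 * s)); [nra | | unfold K; lra].
    unfold nb. replace b1 with ((qx - ox) - r * cos psi) by (unfold b1; ring).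
    replace b2 with ((qy - oy) - r * sin psi) by (unfold b2; ring).
    apply far_norm_ratio; auto; lra. }
  assert (H3 : Rabs (dt / r ^ 2 - 1) <= K / r).
  { apply (Hbound (s ^ 2 + 2 * s)); [nra | | unfold K; lra].
    replace dt with (((px - ox) - r * cos psi) * ((qx - ox) - r * cos psi)
                     + ((py - oy) - r * sin psi) * ((qy - oy) - r * sin psi))
      by (unfold dt, a1, a2, b1, b2; ring).
    apply far_dot_ratio; auto; lra. }
  assert (H4 : Rabs (Rabs dd / r - W) <= K / r).
  { apply (Hbound (s ^ 2 + E)); [nra | | unfold K; lra].
    replace dd with (((px - ox) - r * cos psi) * ((qy - oy) - r * sin psi)
                     - ((py - oy) - r * sin psi) * ((qx - ox) - r * cos psi))
      by (unfold dd, a1, a2, b1, b2; ring).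
    apply far_cross_ratio; auto.
    apply (Rle_lt_trans _ (K / r)); auto. apply Rdiv_le_0_compat; unfold K; nra. }
  exists (na / r), (nb / r), (dt / r ^ 2), (Rabs dd / r). repeat split; auto.
  apply Rabs_le_between in H1, H2, H4.
  assert (Hna : 0 < na) by (replace na with (na / r * r) by (field; lra); nra).
  assert (Hnb : 0 < nb) by (replace nb with (nb / r * r) by (field; lra); nra).
  assert (Hdd : dd <> 0) by (intro E0; rewrite E0, Rabs_R0 in H4; unfold Rdiv in H4; lra).
  rewrite (C_A_cartesian _ _ px py qx qy); fold a1 a2 b1 b2 na nb dd dt; auto.
  field. repeat split; try lra. now apply Rabs_no_R0.
Qed.

Lemma C_A_far_limit (s W E : R) : 0 <= s -> 0 < W -> 0 <= E -> forall eps, 0 < eps ->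
  exists R0, forall r psi ox oy px py qx qy, R0 < r ->
    (px - ox) ^ 2 + (py - oy) ^ 2 <= s ^ 2 -> (qx - ox) ^ 2 + (qy - oy) ^ 2 <= s ^ 2 ->
    Rabs (((qx - ox) * - sin psi + (qy - oy) * cos psi)
          - ((px - ox) * - sin psi + (py - oy) * cos psi) - W) <= E / r ^ 2 ->
    Rabs (C_A (ox + r * cos psi) (oy + r * sin psi) px py qx qy - 4 / W) < eps.
Proof.
  intros Hs HW HE eps Heps.
  destruct (C_A_normalized_close W eps HW Heps) as [d0 [Hd0 Hclose]].
  set (d := Rmin d0 (Rmin (1 / 6) (W / 2))).
  assert (Hdd0 : d <= d0) by apply Rmin_l.
  assert (Hd16 : d <= 1 / 6) by (eapply Rle_trans; [apply Rmin_r | apply Rmin_l]).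
  assert (HdW : d <= W / 2) by (eapply Rle_trans; [apply Rmin_r | apply Rmin_r]).
  assert (Hd : 0 < d) by (repeat apply Rmin_glb_lt; lra).
  set (K := s ^ 2 + 2 * s + E).
  exists (Rmax 1 (K / d)).
  intros r psi ox oy px py qx qy Hr Hp Hq He.
  assert (Hr1 : 1 < r) by (eapply Rle_lt_trans; [apply Rmax_l | exact Hr]).
  assert (HKr : K / r <= d).
  { assert (HrK : K / d < r) by (eapply Rle_lt_trans; [apply Rmax_r | exact Hr]).
    apply (Rmult_le_reg_r r); [lra|]. replace (K / r * r) with K by (field; lra).
    apply (Rmult_lt_compat_r d) in HrK; auto. replace (K / d * d) with K in HrK by (field; lra).
    lra. }
  destruct (C_A_far_normalized s W E r psi ox oy px py qx qy)
    as [a1 [a2 [a3 [a4 [H1 [H2 [H3 [H4 ->]]]]]]]]; auto; fold K; try lra.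
  fold K in H1, H2, H3, H4. apply Hclose; lra.
Qed.

Definition C_A_tends_to_4_div_width (gx gy : R -> R) (ox oy psi : R) : Prop :=
  forall eps : R, 0 < eps ->
  exists R0 : R, forall r : R, R0 < r ->
    let ax := ox + r * cos psi in
    let ay := oy + r * sin psi in
    in_exterior gx gy ax ay /\
    (exists px py qx qy,
        is_tangency_point gx gy ax ay px py /\
        is_tangency_point gx gy ax ay qx qy /\ (px, py) <> (qx, qy)) /\
    (forall px py qx qy,
        is_tangency_point gx gy ax ay px py ->
        is_tangency_point gx gy ax ay qx qy ->
        (px, py) <> (qx, qy) ->
        Rabs (C_A ax ay px py qx qy - 4 / width gx gy psi) < eps).

Section PositiveCurvature.
Variables (gx gy : R -> R) (T ox oy : R).
Hypothesis HT : 0 < T.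
Hypothesis Hsx : forall n t, ex_derive_n gx n t.
Hypothesis Hsy : forall n t, ex_derive_n gy n t.
Hypothesis Hpx : forall t, gx (t + T) = gx t.
Hypothesis Hpy : forall t, gy (t + T) = gy t.
Hypothesis Hinj : forall s t, 0 < t - s < T -> gx s = gx t -> gy s = gy t -> False.
Hypothesis Hk : forall t, 0 < curv_num gx gy t.
Hypothesis Hint : in_interior gx gy ox oy.

Let x1 := Derive gx.
Let y1 := Derive gy.
Let x2 := Derive x1.
Let y2 := Derive y1.
Let vx t := gx t - ox.
Let vy t := gy t - oy.

Lemma is_derive_gx t : is_derive gx t (x1 t).
Proof. apply Derive_correct. exact (Hsx 1 t). Qed.
Lemma is_derive_gy t : is_derive gy t (y1 t).
Proof. apply Derive_correct. exact (Hsy 1 t). Qed.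
Lemma is_derive_x1 t : is_derive x1 t (x2 t).
Proof. apply Derive_correct. exact (Hsx 2 t). Qed.
Lemma is_derive_y1 t : is_derive y1 t (y2 t).
Proof. apply Derive_correct. exact (Hsy 2 t). Qed.

Lemma is_derive_vx t : is_derive vx t (x1 t).
Proof.
  unfold vx. replace (x1 t) with (x1 t - 0) by ring.
  apply (is_derive_minus gx (fun _ => ox)); [apply is_derive_gx|].
  exact (is_derive_const ox t : is_derive (fun _ => ox) t 0).
Qed.
Lemma is_derive_vy t : is_derive vy t (y1 t).
Proof.
  unfold vy. replace (y1 t) with (y1 t - 0) by ring.
  apply (is_derive_minus gy (fun _ => oy)); [apply is_derive_gy|].
  exact (is_derive_const oy t : is_derive (fun _ => oy) t 0).
Qed.

Lemma x1_periodic t : x1 (t + T) = x1 t.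
Proof. exact (is_derive_periodic gx x1 T Hpx is_derive_gx t). Qed.
Lemma y1_periodic t : y1 (t + T) = y1 t.
Proof. exact (is_derive_periodic gy y1 T Hpy is_derive_gy t). Qed.
Lemma vx_periodic t : vx (t + T) = vx t.
Proof. unfold vx. now rewrite Hpx. Qed.
Lemma vy_periodic t : vy (t + T) = vy t.
Proof. unfold vy. now rewrite Hpy. Qed.

Lemma curv_num_eq t : curv_num gx gy t = x1 t * y2 t - y1 t * x2 t.
Proof. reflexivity. Qed.

Lemma interior_cross_pos t : 0 < vx t * y1 t - vy t * x1 t.
Proof.
  pose proof (Hint t) as H. pose proof (Hk t).
  unfold tang_det, det2 in H. fold (x1 t) (y1 t) in H.
  assert (0 < x1 t * (oy - gy t) - y1 t * (ox - gx t))
    by (apply (Rmult_lt_reg_l (curv_num gx gy t)); lra).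
  unfold vx, vy. lra.
Qed.

Lemma speed_pos t : 0 < x1 t ^ 2 + y1 t ^ 2.
Proof.
  pose proof (Hk t) as H. rewrite curv_num_eq in H. apply sum_sq_pos.
  destruct (Req_dec (x1 t) 0) as [E|E]; auto. right. intro E'. rewrite E, E' in H. lra.
Qed.

Lemma radius_pos t : 0 < vx t ^ 2 + vy t ^ 2.
Proof.
  pose proof (interior_cross_pos t) as H. apply sum_sq_pos.
  destruct (Req_dec (vx t) 0) as [E|E]; auto. right. intro E'. rewrite E, E' in H. lra.
Qed.

Let rho t := sqrt (x1 t ^ 2 + y1 t ^ 2).

Lemma speed_norm_pos t : 0 < rho t.
Proof. apply sqrt_lt_R0, speed_pos. Qed.

Let omg := angular_speed x1 y1 x2 y2.

Lemma omg_pos t : 0 < omg t.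
Proof. apply Rdiv_lt_0_compat; [rewrite <- curv_num_eq; apply Hk | apply speed_pos]. Qed.

Lemma omg_periodic t : omg (t + T) = omg t.
Proof.
  assert (Hx2 := is_derive_periodic x1 x2 T x1_periodic is_derive_x1 t).
  assert (Hy2 := is_derive_periodic y1 y2 T y1_periodic is_derive_y1 t).
  unfold omg, angular_speed. now rewrite x1_periodic, y1_periodic, Hx2, Hy2.
Qed.

Lemma x2_continuity : continuity x2.
Proof. intro t. apply (is_derive_continuity_pt x2 (Derive x2 t)), Derive_correct, (Hsx 3 t). Qed.
Lemma y2_continuity : continuity y2.
Proof. intro t. apply (is_derive_continuity_pt y2 (Derive y2 t)), Derive_correct, (Hsy 3 t). Qed.

Lemma omg_continuity : continuity omg.
Proof.
  apply angular_speed_continuity;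
    [exact is_derive_x1 | exact is_derive_y1 | exact speed_pos
    | exact x2_continuity | exact y2_continuity].
Qed.

Lemma curve_compactness_bounds : exists B L c,
  0 <= B /\ (forall t, vx t ^ 2 + vy t ^ 2 <= B ^ 2) /\
  (forall t, rho t <= L) /\ 0 < c /\ (forall t, c <= omg t).
Proof.
  destruct (periodic_max_attained (fun t => vx t ^ 2 + vy t ^ 2) T HT) as [tv Htv].
  { apply continuity_plus; apply continuity_pow2;
      [exact (is_derive_continuity _ _ is_derive_vx) | exact (is_derive_continuity _ _ is_derive_vy)]. }
  { intro t. now rewrite vx_periodic, vy_periodic. }
  destruct (periodic_max_attained (fun t => x1 t ^ 2 + y1 t ^ 2) T HT) as [tL HtL].
  { apply continuity_plus; apply continuity_pow2;
      [exact (is_derive_continuity _ _ is_derive_x1) | exact (is_derive_continuity _ _ is_derive_y1)]. }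
  { intro t. now rewrite x1_periodic, y1_periodic. }
  destruct (periodic_min_attained omg T HT omg_continuity omg_periodic) as [tc Htc].
  exists (sqrt (vx tv ^ 2 + vy tv ^ 2)), (rho tL), (omg tc).
  split; [apply sqrt_pos|]. split.
  { intro t. rewrite pow2_sqrt by nra. apply Htv. }
  split; [intro t; apply sqrt_le_1_alt, HtL|]. split; [apply omg_pos | exact Htc].
Qed.

Lemma position_angle_exists : exists al : R -> R,
  (forall t, is_derive al t (angular_speed vx vy x1 y1 t)) /\ is_polar_angle vx vy al /\
  forall t, al (t + T) = al t + 2 * PI.
Proof.
  destruct (angle_lifting vx vy x1 y1 is_derive_vx is_derive_vy radius_pos
              (is_derive_continuity x1 x2 is_derive_x1) (is_derive_continuity y1 y2 is_derive_y1))
    as [al [Hal Hpal]].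
  destruct (polar_angle_period vx vy x1 y1 is_derive_vx is_derive_vy radius_pos al T
              vx_periodic vy_periodic Hal Hpal) as [k Hkal].
  set (dal := angular_speed vx vy x1 y1).
  assert (Hdal_pos : forall t, 0 < dal t)
    by (intro t; apply Rdiv_lt_0_compat; [apply interior_cross_pos | apply radius_pos]).
  assert (Hdal_per : forall t, dal (t + T) = dal t).
  { intro t. unfold dal, angular_speed. now rewrite vx_periodic, vy_periodic, x1_periodic, y1_periodic. }
  assert (Hdal_cont : continuity dal).
  { apply angular_speed_continuity; [exact is_derive_vx | exact is_derive_vy | exact radius_pos | |];
      apply (is_derive_continuity _ _ is_derive_x1) || apply (is_derive_continuity _ _ is_derive_y1). }
  assert (Hk1 : k = 1%Z).
  { apply (monotone_angle_winds_once vx vy al dal T k HT vx_periodic vy_periodic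
             (is_derive_continuity vx x1 is_derive_vx) (is_derive_continuity vy y1 is_derive_vy)
             Hal Hdal_per Hdal_cont Hdal_pos Hpal Hkal).
    intros s t Hst E1 E2. apply (Hinj s t Hst); unfold vx, vy in *; lra. }
  subst k. exists al. split; [exact Hal | split; [exact Hpal|]].
  intro t. rewrite Hkal. ring.
Qed.

(* The interior point lies to the left of every tangent: the tangent direction
   stays strictly within a half-turn ahead of the position angle. *)
Lemma tangent_ahead_of_position (th al : R -> R) :
  is_polar_angle x1 y1 th -> is_polar_angle vx vy al -> forall t, 0 < sin (th t - al t).
Proof.
  intros Hpth Hpal t. rewrite sin_minus.
  destruct (Hpth t) as [A1 B1]. destruct (Hpal t) as [A2 B2].
  pose proof (interior_cross_pos t) as H.
  assert (r1 : 0 < sqrt (x1 t ^ 2 + y1 t ^ 2)) by (apply sqrt_lt_R0, speed_pos).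
  assert (r2 : 0 < sqrt (vx t ^ 2 + vy t ^ 2)) by (apply sqrt_lt_R0, radius_pos).
  set (q1 := sqrt (x1 t ^ 2 + y1 t ^ 2)) in *. set (q2 := sqrt (vx t ^ 2 + vy t ^ 2)) in *.
  rewrite A1, B1, A2, B2 in H.
  apply (Rmult_lt_reg_l (q2 * q1)); [nra|]. nra.
Qed.

Lemma tangent_angle_exists : exists th : R -> R,
  (forall t, is_derive th t (omg t)) /\ is_polar_angle x1 y1 th /\
  forall t, th (t + T) = th t + 2 * PI.
Proof.
  destruct (angle_lifting x1 y1 x2 y2 is_derive_x1 is_derive_y1 speed_pos x2_continuity y2_continuity)
    as [th [Hth Hpth]].
  destruct (polar_angle_period x1 y1 x2 y2 is_derive_x1 is_derive_y1 speed_pos th T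
              x1_periodic y1_periodic Hth Hpth) as [k Hkth].
  destruct position_angle_exists as [al [Hal [Hpal Hpal_per]]].
  exists th. split; [exact Hth | split; [exact Hpth|]].
  set (g := fun t => th t - al t).
  assert (Hsg := tangent_ahead_of_position th al Hpth Hpal).
  assert (Hgc : continuity g)
    by (apply continuity_minus;
        [exact (is_derive_continuity _ _ Hth) | exact (is_derive_continuity _ _ Hal)]).
  assert (HgT : g (0 + T) = g 0 + 2 * (IZR k - 1) * PI) by (unfold g; rewrite Hkth, Hpal_per; ring).
  pose proof PI_RGT_0.
  (* g would otherwise reach g 0 - pi or g 0 + pi, where its sine vanishes *)
  assert (Hk1 : k = 1%Z).
  { destruct (Z.lt_total k 1) as [Hl|[He|Hl]]; auto; exfalso.
    - assert (IZR k <= 0) by (apply IZR_le; lia).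
      destruct (IVT_gen g 0 (0 + T) (g 0 - PI) Hgc) as [t [_ Et]].
      { rewrite HgT, Rmin_right, Rmax_left; nra. }
      pose proof (Hsg 0) as Hs0. specialize (Hsg t).
      change (0 < sin (g t)) in Hsg. change (0 < sin (g 0)) in Hs0.
      rewrite Et, sin_minus, sin_PI, cos_PI in Hsg. lra.
    - assert (2 <= IZR k) by (apply IZR_le; lia).
      destruct (IVT_gen g 0 (0 + T) (g 0 + PI) Hgc) as [t [_ Et]].
      { rewrite HgT, Rmin_left, Rmax_right; nra. }
      pose proof (Hsg 0) as Hs0. specialize (Hsg t).
      change (0 < sin (g t)) in Hsg. change (0 < sin (g 0)) in Hs0.
      rewrite Et, sin_plus, sin_PI, cos_PI in Hsg. lra. }
  intro t. rewrite Hkth, Hk1. simpl. ring.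
Qed.

Section FixedTangentAngle.
Variable th : R -> R.
Hypothesis Hth : forall t, is_derive th t (omg t).
Hypothesis Hpth : is_polar_angle x1 y1 th.
Hypothesis Hthp : forall t, th (t + T) = th t + 2 * PI.
Variable psi : R.

Let normal_part t := vx t * sin (th t) - vy t * cos (th t).
Let tangent_part t := vx t * cos (th t) + vy t * sin (th t).

Lemma is_derive_normal_part t : is_derive normal_part t (omg t * tangent_part t).
Proof.
  unfold normal_part, tangent_part. auto_derive.
  - repeat split; eexists; [apply is_derive_vx | apply Hth | apply is_derive_vy | apply Hth].
  - replace (Derive (fun x => th x) t) with (omg t) by (symmetry; apply is_derive_unique, Hth).
    replace (Derive (fun x => vx x) t) with (x1 t) by (symmetry; apply is_derive_unique, is_derive_vx).
    replace (Derive (fun x => vy x) t) with (y1 t) by (symmetry; apply is_derive_unique, is_derive_vy).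
    destruct (Hpth t) as [A B]. fold (rho t) in A, B. rewrite A, B. ring.
Qed.

Lemma normal_tangent_parts_sq t : normal_part t ^ 2 + tangent_part t ^ 2 = vx t ^ 2 + vy t ^ 2.
Proof.
  unfold normal_part, tangent_part. pose proof (sin2_cos2 (th t)) as H. unfold Rsqr in H.
  replace (vx t ^ 2 + vy t ^ 2)
    with ((vx t ^ 2 + vy t ^ 2) * (sin (th t) * sin (th t) + cos (th t) * cos (th t)))
    by (rewrite H; ring).
  ring.
Qed.

Lemma tang_det_on_ray r t :
  tang_det gx gy t (ox + r * cos psi) (oy + r * sin psi)
  = rho t * (r * sin (psi - th t) + normal_part t).
Proof.
  unfold tang_det, det2. fold (x1 t) (y1 t). destruct (Hpth t) as [A B]. fold (rho t) in A, B.
  rewrite A, B. unfold normal_part, vx, vy. rewrite sin_minus. ring.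
Qed.

Lemma is_derive_height beta t :
  is_derive (fun t => gx t * - sin beta + gy t * cos beta) t (rho t * sin (th t - beta)).
Proof.
  auto_derive.
  - repeat split; eexists; [apply is_derive_gx | apply is_derive_gy].
  - replace (Derive (fun x => gx x) t) with (x1 t) by (symmetry; apply is_derive_unique, is_derive_gx).
    replace (Derive (fun x => gy x) t) with (y1 t) by (symmetry; apply is_derive_unique, is_derive_gy).
    destruct (Hpth t) as [A B]. fold (rho t) in A, B. rewrite A, B, sin_minus. ring.
Qed.

Lemma th_shift_Z (k : Z) t : th (t + IZR k * T) = th t + 2 * IZR k * PI.
Proof.
  assert (Hp : forall t, th (t + T) - 2 * PI * (t + T) / T = th t - 2 * PI * t / T)
    by (intro s; rewrite Hthp; field; lra).
  pose proof (periodic_shift_Z (fun t => th t - 2 * PI * t / T) T Hp k t) as H. simpl in H.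
  replace (th (t + IZR k * T))
    with (th (t + IZR k * T) - 2 * PI * (t + IZR k * T) / T + 2 * PI * (t + IZR k * T) / T) by ring.
  rewrite H. field. lra.
Qed.

Lemma th_surjective y : exists t, th t = y.
Proof.
  pose proof PI_RGT_0.
  destruct (shift_into_period (2 * PI) ltac:(lra) y (th 0)) as [k Hkk].
  destruct (IVT_gen th 0 (0 + T) (y + IZR k * (2 * PI)) (is_derive_continuity th omg Hth))
    as [t [_ Et]].
  { rewrite Hthp, Rmin_left, Rmax_right; lra. }
  exists (t + IZR (- k) * T). rewrite th_shift_Z, Et, opp_IZR. ring.
Qed.

Let height t := gx t * - sin psi + gy t * cos psi.

Lemma height_shift_Z (k : Z) t : height (t + IZR k * T) = height t.
Proof. apply (periodic_shift_Z height T). intro s. unfold height. now rewrite Hpx, Hpy. Qed.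

(* As th increases from psi to psi + pi the height increases, and then
   decreases back over the rest of the period. *)
Lemma height_bounds tmin tmax : th tmin = psi -> th tmax = psi + PI ->
  forall s, height tmin <= height s <= height tmax.
Proof.
  intros E1 E2 s. pose proof PI_RGT_0.
  pose proof (derive_pos_le th omg Hth omg_pos) as Hle.
  destruct (shift_into_period T HT s tmin) as [k Hkk].
  rewrite <- (height_shift_Z k s). set (s' := s + IZR k * T) in *.
  assert (Htm : tmin < tmax) by (apply (derive_pos_lt_inv th omg Hth omg_pos); lra).
  assert (Htm2 : tmax < tmin + T) by (apply (derive_pos_lt_inv th omg Hth omg_pos); rewrite Hthp; lra).
  pose proof (is_derive_height psi) as Hdh. pose proof speed_norm_pos as Hrho.
  destruct (Rle_or_lt s' tmax) as [H1|H1].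
  - assert (Hup : forall a b, tmin <= a -> a <= b -> b <= tmax -> height a <= height b).
    { intros a b Ha Hab Hb.
      apply (derive_nonneg_le height (fun t => rho t * sin (th t - psi)) a b Hab);
        [intros; apply Hdh|].
      intros t Ht. pose proof (Hle tmin t ltac:(lra)). pose proof (Hle t tmax ltac:(lra)).
      apply Rmult_le_pos; [left; apply Hrho | apply sin_ge_0; lra]. }
    split; apply Hup; lra.
  - assert (Hdn : forall a b, tmax <= a -> a <= b -> b <= tmin + T -> height b <= height a).
    { intros a b Ha Hab Hb.
      apply (derive_nonpos_ge height (fun t => rho t * sin (th t - psi)) a b Hab);
        [intros; apply Hdh|].
      intros t Ht. pose proof (Hle tmax t ltac:(lra)). pose proof (Hle t (tmin + T) ltac:(lra)).
      rewrite Hthp in *. assert (sin (th t - psi) <= 0) by (apply sin_le_0; lra).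
      specialize (Hrho t). nra. }
    split; [|apply Hdn; lra].
    replace (height tmin) with (height (tmin + IZR 1 * T)) by apply height_shift_Z.
    rewrite Rmult_1_l. apply Hdn; lra.
Qed.

Lemma height_gap tmin tmax : th tmin = psi -> th tmax = psi + PI -> height tmin < height tmax.
Proof.
  intros E1 E2. pose proof PI_RGT_0.
  destruct (th_surjective (psi + PI / 6)) as [q1 Eq1].
  destruct (th_surjective (psi + 5 * PI / 6)) as [q2 Eq2].
  assert (Hq : q1 < q2) by (apply (derive_pos_lt_inv th omg Hth omg_pos); lra).
  destruct (MVT_interval height (fun t => rho t * sin (th t - psi)) q1 q2 (Rlt_le _ _ Hq)
              (fun t _ => is_derive_height psi t))
    as [xi [Hxi Exi]].
  pose proof (derive_pos_le th omg Hth omg_pos q1 xi ltac:(lra)).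
  pose proof (derive_pos_le th omg Hth omg_pos xi q2 ltac:(lra)).
  assert (Hs : 1 / 4 < sin (th xi - psi)).
  { rewrite <- cos_shift. apply (cos_lt_interval (- (PI / 3)) _ (PI / 3)); try lra.
    - rewrite cos_neg, cos_PI3; lra.
    - rewrite cos_PI3; lra. }
  pose proof (speed_norm_pos xi).
  assert (0 < rho xi * sin (th xi - psi) * (q2 - q1)) by (apply Rmult_lt_0_compat; nra).
  pose proof (height_bounds tmin tmax E1 E2 q1). pose proof (height_bounds tmin tmax E1 E2 q2).
  lra.
Qed.

Lemma width_as_height_range tmin tmax : th tmin = psi -> th tmax = psi + PI ->
  width gx gy psi = height tmax - height tmin.
Proof.
  intros E1 E2. pose proof (height_bounds tmin tmax E1 E2) as Hb.
  unfold width, support.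
  assert (L1 : Lub_Rbar (fun s => exists t, s = dot2 (gx t) (gy t) (- sin psi) (cos psi))
               = Finite (height tmax)).
  { apply is_lub_Rbar_unique. split.
    - intros x [t ->]. simpl. apply Hb.
    - intros b Hub. apply Hub. now exists tmax. }
  assert (L2 : Lub_Rbar (fun s => exists t, s = dot2 (gx t) (gy t) (sin psi) (- cos psi))
               = Finite (- height tmin)).
  { apply is_lub_Rbar_unique. split.
    - intros x [t ->]. simpl. unfold dot2. specialize (Hb t). unfold height in *. lra.
    - intros b Hub. apply Hub. exists tmin. unfold dot2, height. ring. }
  rewrite L1, L2. simpl. ring.
Qed.

Section FarPoint.
Variables (B L c : R).
Hypothesis HB0 : 0 <= B.
Hypothesis HB : forall t, vx t ^ 2 + vy t ^ 2 <= B ^ 2.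
Hypothesis HL : forall t, rho t <= L.
Hypothesis Hc0 : 0 < c.
Hypothesis Hc : forall t, c <= omg t.
Variable r : R.
Hypothesis Hr : 2 * B < r.

Let G := tangency_fun th normal_part psi r.

Lemma normal_part_bound t : Rabs (normal_part t) <= B.
Proof.
  apply sq_le_Rabs; auto. pose proof (normal_tangent_parts_sq t). pose proof (HB t).
  pose proof (pow2_ge_0 (tangent_part t)). lra.
Qed.

Lemma tangent_part_bound t : Rabs (tangent_part t) <= B.
Proof.
  apply sq_le_Rabs; auto. pose proof (normal_tangent_parts_sq t). pose proof (HB t).
  pose proof (pow2_ge_0 (normal_part t)). lra.
Qed.

Lemma opp_normal_part_bound t : Rabs (- normal_part t) <= B.
Proof. rewrite Rabs_Ropp. apply normal_part_bound. Qed.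

Lemma opp_tangent_part_bound t : Rabs (- tangent_part t) <= B.
Proof. rewrite Rabs_Ropp. apply tangent_part_bound. Qed.

Lemma is_derive_opp_normal_part t :
  is_derive (fun t => - normal_part t) t (omg t * - tangent_part t).
Proof.
  replace (omg t * - tangent_part t) with (- (omg t * tangent_part t)) by ring.
  apply (is_derive_opp normal_part), is_derive_normal_part.
Qed.

(* The opposite half-turn is the window around psi + pi of the equation -G = 0. *)
Lemma tangency_fun_opposite t :
  tangency_fun th (fun t => - normal_part t) (psi + PI) r t = - G t.
Proof.
  unfold G, tangency_fun. replace (psi + PI - th t) with ((psi - th t) + PI) by ring.
  rewrite neg_sin. ring.
Qed.

Lemma tangency_fun_shift_Z (k : Z) t : G (t + IZR k * T) = G t.
Proof.
  apply (periodic_shift_Z G T). intro s. unfold G, tangency_fun, normal_part.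
  rewrite Hthp, vx_periodic, vy_periodic.
  replace (psi - (th s + 2 * PI)) with ((psi - th s) + - (2 * PI)) by ring.
  rewrite sin_plus, sin_plus, cos_plus, cos_neg, sin_neg, cos_2PI, sin_2PI. ring.
Qed.

Lemma far_point_exterior : in_exterior gx gy (ox + r * cos psi) (oy + r * sin psi).
Proof.
  destruct (th_surjective (psi + PI / 2)) as [tb Etb]. exists tb.
  rewrite tang_det_on_ray, Etb. replace (psi - (psi + PI / 2)) with (- (PI / 2)) by ring.
  rewrite sin_neg, sin_PI2. pose proof (speed_norm_pos tb). pose proof (Hk tb).
  pose proof (normal_part_bound tb) as Hm. apply Rabs_le_between in Hm.
  assert (rho tb * (r * -1 + normal_part tb) < 0) by (apply Rmult_pos_neg; lra).
  apply Rmult_pos_neg; lra.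
Qed.

Lemma far_tangency_zeros : exists z1 z2,
  z1 < z2 < z1 + T /\ G z1 = 0 /\ G z2 = 0 /\
  in_window th psi z1 /\ in_window th (psi + PI) z2 /\
  forall t, G t = 0 -> (gx t = gx z1 /\ gy t = gy z1) \/ (gx t = gx z2 /\ gy t = gy z2).
Proof.
  pose proof PI_RGT_0. pose proof (derive_pos_lt th omg Hth omg_pos) as Hlt.
  pose proof (derive_pos_lt_inv th omg Hth omg_pos) as Hlt_inv.
  destruct (th_surjective (psi - PI / 2)) as [ta Eta].
  destruct (th_surjective (psi + PI / 2)) as [tb Etb].
  set (te := ta + T).
  assert (Ete : th te = psi + PI + PI / 2) by (unfold te; rewrite Hthp, Eta; lra).
  assert (Htab : ta < tb) by (apply Hlt_inv; lra).
  assert (Htbe : tb < te) by (apply Hlt_inv; lra).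
  destruct (window_zero_exists th omg normal_part tangent_part psi r B Hth is_derive_normal_part
              normal_part_bound Hr ta tb Htab Eta Etb) as [z1 [Hz1 Gz1]].
  destruct (window_zero_exists th omg (fun t => - normal_part t) (fun t => - tangent_part t)
              (psi + PI) r B Hth is_derive_opp_normal_part opp_normal_part_bound Hr tb te Htbe
              ltac:(rewrite Etb; field) ltac:(rewrite Ete; field)) as [z2 [Hz2 Gz2]].
  rewrite tangency_fun_opposite in Gz2. fold (G z1) in Gz1.
  assert (W1 : forall t, ta <= t <= tb -> in_window th psi t).
  { intros t Ht. unfold in_window. rewrite <- Eta, <- Etb.
    split; apply (derive_pos_le th omg Hth omg_pos); lra. }
  assert (W2 : forall t, tb <= t <= te -> in_window th (psi + PI) t).
  { intros t Ht. unfold in_window. replace (psi + PI - PI / 2) with (th tb) by (rewrite Etb; field).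
    replace (psi + PI + PI / 2) with (th te) by (rewrite Ete; field).
    split; apply (derive_pos_le th omg Hth omg_pos); lra. }
  exists z1, z2. split; [unfold te in Hz2; lra|]. split; [exact Gz1|]. split; [lra|].
  split; [apply W1; lra|]. split; [apply W2; lra|].
  intros t Gt. destruct (shift_into_period T HT t ta) as [k Hkt].
  rewrite <- (periodic_shift_Z gx T Hpx k t), <- (periodic_shift_Z gy T Hpy k t).
  rewrite <- (tangency_fun_shift_Z k t) in Gt. set (t' := t + IZR k * T) in *.
  destruct (Rle_or_lt t' tb) as [Hc1|Hc1].
  - left. replace t' with z1; [auto|].
    apply (window_zero_unique th omg normal_part tangent_part psi r B Hth omg_pos
             is_derive_normal_part normal_part_bound tangent_part_bound Hr);
      [apply W1; lra | apply W1; lra | exact Gz1 | exact Gt].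
  - right. replace t' with z2; [auto|].
    apply (window_zero_unique th omg (fun t => - normal_part t) (fun t => - tangent_part t)
             (psi + PI) r B Hth omg_pos is_derive_opp_normal_part opp_normal_part_bound
             opp_tangent_part_bound Hr);
      [apply W2; lra | apply W2; unfold te in *; lra | rewrite tangency_fun_opposite; lra
      | rewrite tangency_fun_opposite; lra].
Qed.

Lemma far_height_gap z1 z2 : G z1 = 0 -> G z2 = 0 ->
  in_window th psi z1 -> in_window th (psi + PI) z2 ->
  Rabs (height z2 - height z1 - width gx gy psi) <= 2 * (L / c) * B ^ 2 / r ^ 2.
Proof.
  intros Gz1 Gz2 W1 W2.
  destruct (th_surjective psi) as [tmin Etmin].
  destruct (th_surjective (psi + PI)) as [tmax Etmax].
  rewrite (width_as_height_range tmin tmax Etmin Etmax).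
  assert (HL0 : 0 <= L) by (pose proof (HL 0); pose proof (speed_norm_pos 0); lra).
  assert (HLc : 0 <= L / c) by (apply Rdiv_le_0_compat; lra).
  assert (S1 : height z1 - height tmin <= L / c * (1 - cos (psi - th z1))).
  { apply (height_near_minimum th omg height rho psi L c Hth Hc Hc0); auto.
    intro t. apply is_derive_height. }
  assert (C1 : 1 - cos (psi - th z1) <= B ^ 2 / r ^ 2)
    by exact (window_zero_near_center th normal_part psi r B normal_part_bound Hr z1 W1 Gz1).
  assert (S2 : - height z2 - - height tmax <= L / c * (1 - cos (psi + PI - th z2))).
  { apply (height_near_minimum th omg (fun t => - height t) rho (psi + PI) L c Hth Hc Hc0); auto.
    intro t. apply (is_derive_ext (fun t => gx t * - sin (psi + PI) + gy t * cos (psi + PI))).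
    - intro s. change (gx s * - sin (psi + PI) + gy s * cos (psi + PI) = - height s).
      unfold height. rewrite neg_sin, neg_cos. ring.
    - apply is_derive_height. }
  assert (C2 : 1 - cos (psi + PI - th z2) <= B ^ 2 / r ^ 2).
  { apply (window_zero_near_center th (fun t => - normal_part t) (psi + PI) r B
             opp_normal_part_bound Hr z2 W2).
    rewrite tangency_fun_opposite. lra. }
  pose proof (height_bounds tmin tmax Etmin Etmax z1).
  pose proof (height_bounds tmin tmax Etmin Etmax z2).
  apply Rmult_le_compat_l with (r := L / c) in C1, C2; auto.
  apply Rabs_le. replace (2 * (L / c) * B ^ 2 / r ^ 2) with (2 * (L / c * (B ^ 2 / r ^ 2)))
    by (field; nra).
  split; lra.
Qed.

End FarPoint.

Lemma far_observer_C_A_limit : C_A_tends_to_4_div_width gx gy ox oy psi.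
Proof.
  intros eps Heps.
  destruct curve_compactness_bounds as [B [L [c [HB0 [HB [HL [Hc0 Htc]]]]]]].
  assert (HLc : 0 <= 2 * (L / c) * B ^ 2).
  { assert (0 <= L) by (pose proof (HL 0); pose proof (speed_norm_pos 0); lra).
    apply Rmult_le_pos; [|nra]. apply Rmult_le_pos; [lra | apply Rdiv_le_0_compat; lra]. }
  destruct (th_surjective psi) as [tmin Etmin].
  destruct (th_surjective (psi + PI)) as [tmax Etmax].
  assert (HW : 0 < width gx gy psi).
  { rewrite (width_as_height_range tmin tmax Etmin Etmax).
    pose proof (height_gap tmin tmax Etmin Etmax). lra. }
  destruct (C_A_far_limit B (width gx gy psi) _ HB0 HW HLc eps Heps) as [R0 HR0].
  exists (Rmax R0 (2 * B + 1)). intros r Hr. cbv zeta.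
  assert (HrR0 : R0 < r) by (pose proof (Rmax_l R0 (2 * B + 1)); lra).
  assert (HrB : 2 * B < r) by (pose proof (Rmax_r R0 (2 * B + 1)); lra).
  destruct (far_tangency_zeros B HB0 HB r HrB) as [z1 [z2 [Hz12 [Gz1 [Gz2 [W1 [W2 Hzeros]]]]]]].
  assert (Hest : Rabs (C_A (ox + r * cos psi) (oy + r * sin psi) (gx z1) (gy z1) (gx z2) (gy z2)
                       - 4 / width gx gy psi) < eps).
  { apply HR0; auto; [apply HB | apply HB |].
    replace ((gx z2 - ox) * - sin psi + (gy z2 - oy) * cos psi
             - ((gx z1 - ox) * - sin psi + (gy z1 - oy) * cos psi) - width gx gy psi)
      with (height z2 - height z1 - width gx gy psi) by (unfold height; ring).
    exact (far_height_gap B L c HB0 HB HL Hc0 Htc r HrB z1 z2 Gz1 Gz2 W1 W2). }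
  assert (Htang : forall px py,
            is_tangency_point gx gy (ox + r * cos psi) (oy + r * sin psi) px py ->
            (px = gx z1 /\ py = gy z1) \/ (px = gx z2 /\ py = gy z2)).
  { intros px py [t [-> [-> Ht]]]. apply Hzeros.
    rewrite tang_det_on_ray in Ht. apply Rmult_integral in Ht.
    destruct Ht as [Ht|Ht]; [pose proof (speed_norm_pos t); lra | exact Ht]. }
  split; [|split].
  - exact (far_point_exterior B HB0 HB r HrB).
  - exists (gx z1), (gy z1), (gx z2), (gy z2). split; [|split].
    + exists z1. split; [reflexivity | split; [reflexivity|]].
      rewrite tang_det_on_ray. unfold tangency_fun in Gz1. rewrite Gz1. ring.
    + exists z2. split; [reflexivity | split; [reflexivity|]].
      rewrite tang_det_on_ray. unfold tangency_fun in Gz2. rewrite Gz2. ring.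
    + intro E. injection E as E1 E2. apply (Hinj z1 z2); auto. lra.
  - intros px py qx qy HP HQ Hne.
    destruct (Htang px py HP) as [[-> ->]|[-> ->]], (Htang qx qy HQ) as [[-> ->]|[-> ->]];
      [now exfalso | exact Hest | rewrite C_A_sym; exact Hest | now exfalso].
Qed.

End FixedTangentAngle.

Lemma positive_curvature_C_A_limit (psi : R) : C_A_tends_to_4_div_width gx gy ox oy psi.
Proof.
  destruct tangent_angle_exists as [th [Hth [Hpth Hthp]]].
  exact (far_observer_C_A_limit th Hth Hpth Hthp psi).
Qed.

End PositiveCurvature.

Section Reversal.
Variables gx gy : R -> R.
Hypothesis Hsx : forall n t, ex_derive_n gx n t.
Hypothesis Hsy : forall n t, ex_derive_n gy n t.

Let hx y := gx (- y).
Let hy y := gy (- y).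

Lemma ex_derive_n_reverse (f : R -> R) :
  (forall n t, ex_derive_n f n t) -> forall n t, ex_derive_n (fun y => f (- y)) n t.
Proof. intros H n t. apply ex_derive_n_comp_opp, filter_forall. intros; apply H. Qed.

Lemma Derive_reverse (f : R -> R) : (forall n t, ex_derive_n f n t) ->
  forall t, Derive (fun y => f (- y)) t = - Derive f (- t).
Proof.
  intros H t. pose proof (Derive_n_comp_opp f 1 t (filter_forall _ (fun y k _ => H k y))) as E.
  simpl in E. change (Derive (fun x => f x)) with (Derive f) in E. rewrite E. ring.
Qed.

Lemma Derive_2_reverse (f : R -> R) : (forall n t, ex_derive_n f n t) ->
  forall t, Derive_n (fun y => f (- y)) 2 t = Derive_n f 2 (- t).
Proof.
  intros H t. rewrite (Derive_n_comp_opp f 2 t (filter_forall _ (fun y k _ => H k y))). ring.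
Qed.

Lemma curv_num_reverse t : curv_num hx hy t = - curv_num gx gy (- t).
Proof. unfold curv_num, det2, hx, hy. rewrite !Derive_reverse, !Derive_2_reverse by auto. ring. Qed.

Lemma tang_det_reverse t ax ay : tang_det hx hy t ax ay = - tang_det gx gy (- t) ax ay.
Proof. unfold tang_det, det2, hx, hy. rewrite !Derive_reverse by auto. ring. Qed.

Lemma in_interior_reverse ox oy : in_interior gx gy ox oy -> in_interior hx hy ox oy.
Proof.
  intros Hint t. rewrite curv_num_reverse, tang_det_reverse. specialize (Hint (- t)). lra.
Qed.

Lemma in_exterior_reverse ax ay : in_exterior hx hy ax ay -> in_exterior gx gy ax ay.
Proof.
  intros [t Ht]. exists (- t). rewrite curv_num_reverse, tang_det_reverse in Ht. lra.
Qed.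

Lemma is_tangency_point_reverse ax ay px py :
  is_tangency_point hx hy ax ay px py <-> is_tangency_point gx gy ax ay px py.
Proof.
  split.
  - intros [t [E1 [E2 E3]]]. exists (- t). rewrite tang_det_reverse in E3. repeat split; auto. lra.
  - intros [t [E1 [E2 E3]]]. exists (- t). unfold hx, hy. rewrite tang_det_reverse, !Ropp_involutive.
    repeat split; auto. lra.
Qed.

Lemma width_reverse psi : width hx hy psi = width gx gy psi.
Proof.
  unfold width, support, hx, hy.
  f_equal; f_equal; apply Lub_Rbar_eqset; intro x; split; intros [t ->]; exists (- t);
    now rewrite ?Ropp_involutive.
Qed.

Lemma C_A_tends_reverse ox oy psi :
  C_A_tends_to_4_div_width hx hy ox oy psi -> C_A_tends_to_4_div_width gx gy ox oy psi.
Proof.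
  intros Hlim eps Heps. destruct (Hlim eps Heps) as [R0 HR0]. exists R0. intros r Hr.
  destruct (HR0 r Hr) as [Hext [[px [py [qx [qy [HP [HQ Hne]]]]]] Hest]].
  rewrite width_reverse in Hest. split; [|split].
  - now apply in_exterior_reverse.
  - exists px, py, qx, qy. rewrite <- !is_tangency_point_reverse. auto.
  - intros px' py' qx' qy' HP' HQ'. apply Hest; now apply is_tangency_point_reverse.
Qed.

End Reversal.

Lemma curv_num_continuity (gx gy : R -> R) :
  (forall n t, ex_derive_n gx n t) -> (forall n t, ex_derive_n gy n t) ->
  continuity (curv_num gx gy).
Proof.
  intros Hsx Hsy. unfold curv_num, det2.
  apply continuity_minus; apply continuity_mult; intro t;
    [ apply (is_derive_continuity_pt _ _ _ (Derive_correct _ _ (Hsx 2%nat t)))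
    | apply (is_derive_continuity_pt _ _ _ (Derive_correct _ _ (Hsy 3%nat t)))
    | apply (is_derive_continuity_pt _ _ _ (Derive_correct _ _ (Hsy 2%nat t)))
    | apply (is_derive_continuity_pt _ _ _ (Derive_correct _ _ (Hsx 3%nat t))) ].
Qed.

Lemma injective_on_period_shift (gx gy : R -> R) (T : R) : 0 < T ->
  (forall t, gx (t + T) = gx t) -> (forall t, gy (t + T) = gy t) ->
  (forall s t, 0 <= s < T -> 0 <= t < T -> gx s = gx t -> gy s = gy t -> s = t) ->
  forall s t, 0 < t - s < T -> gx s = gx t -> gy s = gy t -> False.
Proof.
  intros HT Hpx Hpy Hinj s t Hst E1 E2.
  destruct (shift_into_period T HT s 0) as [k Hk].
  rewrite <- (periodic_shift_Z gx T Hpx k s), <- (periodic_shift_Z gx T Hpx k t) in E1.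
  rewrite <- (periodic_shift_Z gy T Hpy k s), <- (periodic_shift_Z gy T Hpy k t) in E2.
  set (s' := s + IZR k * T) in *. set (t' := t + IZR k * T) in *.
  assert (Hd : t' - s' = t - s) by (unfold s', t'; ring).
  destruct (Rlt_or_le t' T) as [H|H].
  - assert (s' = t') by (apply Hinj; auto; lra). lra.
  - assert (E1' : gx s' = gx (t' - T)) by (rewrite E1, <- (Hpx (t' - T)); f_equal; ring).
    assert (E2' : gy s' = gy (t' - T)) by (rewrite E2, <- (Hpy (t' - T)); f_equal; ring).
    assert (s' = t' - T) by (apply Hinj; auto; lra). lra.
Qed.

Theorem lemma2p3 (gx gy : R -> R) (T ox oy psi : R) :
  is_oval gx gy T ->
  in_interior gx gy ox oy ->
  forall eps : R, 0 < eps ->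
  exists R0 : R, forall r : R, R0 < r ->
    let ax := ox + r * cos psi in
    let ay := oy + r * sin psi in
    in_exterior gx gy ax ay /\
    (exists px py qx qy,
        is_tangency_point gx gy ax ay px py /\
        is_tangency_point gx gy ax ay qx qy /\ (px, py) <> (qx, qy)) /\
    (forall px py qx qy,
        is_tangency_point gx gy ax ay px py ->
        is_tangency_point gx gy ax ay qx qy ->
        (px, py) <> (qx, qy) ->
        Rabs (C_A ax ay px py qx qy - 4 / width gx gy psi) < eps).
Proof.
  intros [HT [Hsx [Hsy [Hper [Hinj Hcurv]]]]] Hint.
  assert (Hpx : forall t, gx (t + T) = gx t) by (intro; apply Hper).
  assert (Hpy : forall t, gy (t + T) = gy t) by (intro; apply Hper).
  pose proof (injective_on_period_shift gx gy T HT Hpx Hpy Hinj) as Hinj'.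
  destruct (continuity_nonzero_sign _ (curv_num_continuity gx gy Hsx Hsy) Hcurv) as [Hpos|Hneg].
  - exact (positive_curvature_C_A_limit gx gy T ox oy HT Hsx Hsy Hpx Hpy Hinj' Hpos Hint psi).
  - apply (C_A_tends_reverse gx gy Hsx Hsy).
    apply (positive_curvature_C_A_limit _ _ T); auto using ex_derive_n_reverse, in_interior_reverse.
    + intro t. rewrite <- (Hpx (- (t + T))). f_equal. ring.
    + intro t. rewrite <- (Hpy (- (t + T))). f_equal. ring.
    + intros s t Hst E1 E2. apply (Hinj' (- t) (- s)); auto; lra.
    + intro t. rewrite curv_num_reverse by auto. specialize (Hneg (- t)). lra.
Qed.
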